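(* Let $S_\lambda\in\mathcal B(\ell^2(V))$ be a $2$-isometric weighted shift on a rooted directed tree $\mathcal T=(V,E)$ with root $\omega$ and weights $\{\lambda_v\}_{v\in V^\circ}$, and suppose there is $\{\alpha_v\}_{v\in V}\subseteq\mathbb R_+$ with $\|S_\lambda e_u\|=\alpha_{\mathrm{par}(u)}$ for all $u\in V^\circ$. Then $\mathcal T$ is leafless and $$S_\lambda\cong S_{[x]}\oplus\bigoplus_{k=1}^\infty\big(S_{[\xi_k(x)]}\big)^{\oplus j_k},$$ where $x=\|S_\lambda e_\omega\|$ and $j_k=\mathfrak j^{\mathcal T}_k$ for $k\in\mathbb N$. Moreover, if all weights are nonzero, then $j_k\le\aleph_0$ for all $k$.
   Context: A directed tree $\mathcal T=(V,E)$ is a connected directed graph without circuits with each vertex having at most one parent; $\omega$ denotes the root, $V^\circ=V\setminus\{\omega\}$, $\mathrm{par}(v)$ is the parent, $\mathrm{Chi}(u)$ the set of children, $\deg u=\#\mathrm{Chi}(u)$, $\mathrm{Chi}^0(\omega)=\{\omega\}$, $\mathrm{Chi}^{n}(\omega)=\bigcup_{u\in\mathrm{Chi}^{n-1}(\omega)}\mathrm{Chi}(u)$. The weighted shift is $(S_\lambda f)(v)=\lambda_vf(\mathrm{par}(v))$, $(S_\lambda f)(\omega)=0$; $e_u$ is the indicator of $\{u\}$. $2$-isometry: $I-2T^*T+T^{*2}T^2=0$. $\xi_n(x)=\sqrt{\frac{1+(n+1)(x^2-1)}{1+n(x^2-1)}}$. For $x\ge1$, $S_{[x]}$ is the unilateral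 weighted shift in $\ell^2(\mathbb Z_+)$ with weights $\{\xi_n(x)\}_{n\ge0}$. For a leafless tree, the $k$th generation branching degree is $\mathfrak j^{\mathcal T}_k=\sum_{u\in\mathrm{Chi}^{k-1}(\omega)}(\deg u-1)$. $A^{\oplus\mathfrak n}$ is the $\mathfrak n$-fold orthogonal sum of copies of $A$ ($A^{\oplus0}=0$ on the zero space). *)

From Stdlib Require Import Reals List ClassicalEpsilon.
Open Scope R_scope.
Set Implicit Arguments.

Definition Cx : Type := (R * R)%type.
Definition C0 : Cx := (0, 0).
Definition C1 : Cx := (1, 0).
Definition RtoC (r : R) : Cx := (r, 0).
Definition Cadd (z w : Cx) : Cx := (fst z + fst w, snd z + snd w).
Definition Cmul (z w : Cx) : Cx :=
  (fst z * fst w - snd z * snd w, fst z * snd w + snd z * fst w).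
Definition Cnorm2 (z : Cx) : R := fst z * fst z + snd z * snd z.

Definition fsum {I : Type} (g : I -> R) (l : list I) : R := fold_right Rplus 0 (map g l).
(* [has_sum g s] : the (unordered) sum of the family g equals s, i.e. s is the
   supremum of all finite partial sums (for nonnegative g). *)
Definition has_sum {I : Type} (g : I -> R) (s : R) : Prop :=
  is_lub (fun r => exists l : list I, NoDup l /\ r = fsum g l) s.

Definition nsq {I : Type} (f : I -> Cx) (s : R) : Prop := has_sum (fun i => Cnorm2 (f i)) s.
Definition l2 {I : Type} (f : I -> Cx) : Prop := exists s, nsq f s.

Definition bounded_op {I : Type} (T : (I -> Cx) -> (I -> Cx)) : Prop :=
  (forall f, l2 f -> l2 (T f)) /\
  exists M : R, forall f s t, l2 f -> nsq f s -> nsq (T f) t -> t <= M * s.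

(* 2-isometry: I - 2T*T + T*^2T^2 = 0, i.e. ||f||^2 - 2||Tf||^2 + ||T^2 f||^2 = 0 *)
Definition two_isometry {I : Type} (T : (I -> Cx) -> (I -> Cx)) : Prop :=
  forall f a b c, l2 f -> nsq f a -> nsq (T f) b -> nsq (T (T f)) c ->
    a - 2 * b + c = 0.

Definition unitarily_equiv {A B : Type} (S : (A -> Cx) -> (A -> Cx))
  (T : (B -> Cx) -> (B -> Cx)) : Prop :=
  exists U : (A -> Cx) -> (B -> Cx),
    (forall f, l2 f -> l2 (U f)) /\
    (forall f g, l2 f -> l2 g ->
        forall b, U (fun a => Cadd (f a) (g a)) b = Cadd (U f b) (U g b)) /\
    (forall (z : Cx) f, l2 f -> forall b, U (fun a => Cmul z (f a)) b = Cmul z (U f b)) /\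
    (forall f s, l2 f -> (nsq f s <-> nsq (U f) s)) /\
    (forall g, l2 g -> exists f, l2 f /\ forall b, U f b = g b) /\
    (forall f, l2 f -> forall b, U (S f) b = T (U f) b).

(* a rooted directed tree on V is given by its root and the parent map
   (None exactly at the root); every vertex reaches the root. *)
Definition parO {V : Type} (par : V -> option V) (o : option V) : option V :=
  match o with Some v => par v | None => None end.

Definition gen {V : Type} (root : V) (par : V -> option V) (n : nat) (u : V) : Prop :=
  Nat.iter n (parO par) (Some u) = Some root.

Definition is_rooted_tree {V : Type} (root : V) (par : V -> option V) : Prop :=
  par root = None /\
  (forall v, par v = None -> v = root) /\
  (forall v, exists n, gen root par n v).

Definition leafless {V : Type} (par : V -> option V) : Prop :=
  forall u, exists v, par v = Some u.

Definition wshift {V : Type} (par : V -> option V) (lam : V -> Cx) (f : V -> Cx) : V -> Cx :=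
  fun v => match par v with None => C0 | Some p => Cmul (lam v) (f p) end.

Definition e_ {V : Type} (u : V) : V -> Cx :=
  fun v => if excluded_middle_informative (v = u) then C1 else C0.

Definition xi (n : nat) (x : R) : R :=
  sqrt ((1 + (INR n + 1) * (x ^ 2 - 1)) / (1 + INR n * (x ^ 2 - 1))).

Definition uwshift (w : nat -> R) (f : nat -> Cx) : nat -> Cx :=
  fun n => match n with O => C0 | S m => Cmul (RtoC (w m)) (f m) end.

(* Multiplicity set for k = kk+1:
   disjoint union over u in Chi^kk(root) of Chi(u) minus one chosen child c u;
   its cardinality is j_{kk+1} = sum_{u in Chi^kk} (deg u - 1). *)
Definition Jmult {V : Type} (root : V) (par : V -> option V) (c : V -> V) (kk : nat) : Type :=
  { p : V * V | gen root par kk (fst p) /\ par (snd p) = Some (fst p) /\ snd p <> c (fst p) }.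

(* index set of S_[x] (+) (+)_{k>=1} (S_[xi_k(x)])^{(+) J k}; summand kk <-> k = kk+1 *)
Definition Idx (J : nat -> Type) : Type := (nat + { kk : nat & (J kk * nat)%type })%type.

Definition model_op (x : R) (J : nat -> Type) (g : Idx J -> Cx) : Idx J -> Cx :=
  fun i => match i with
  | inl n => uwshift (fun m => xi m x) (fun m => g (inl m)) n
  | inr (existT _ kk (j, n)) =>
      uwshift (fun m => xi m (xi (S kk) x)) (fun m => g (inr (existT _ kk (j, m)))) n
  end.
Arguments model_op x J g i : clear implicits.
Arguments Idx J : clear implicits.

(* Testing the 2-isometry identity on [e_u] gives [1 - 2 t_u + alpha_u^2 t_u = 0] for
   [t_u = ||S e_u||^2], and [t_v = alpha_u^2] for every child [v] of [u].  Hence [t_(k+1) = 2 - 1/t_k]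
   along generations, so [t_u = xi_(depth u)(x)^2], [x >= 1], and every vertex has a child with
   nonzero weight: the tree is leafless.  Fix such a child [c u] of every [u].  For each [y], a
   Householder reflection of l^2(Chi(y)) maps [S e_y] to a unimodular multiple of
   [xi_(depth y)(x) e_(c y)].  Applying these reflections generation by generation and transporting
   values down the chains [u, c u, c (c u), ...] yields a unitary turning [S] into the direct sum of
   weighted shifts along these chains.  A chain starts at the root or at an unchosen child of a vertex
   of depth [k], and then its weights are [xi_n (xi_(k+1) x) = xi_(n+k+1) x]; such chains are exactly
   indexed by the index set of the model.  When all weights are nonzero, the children of [u] form the
   support of the summable family [|S e_u|^2] and are therefore countable. *)

From Pilot Require Import Defs.
From Stdlib Require Import Reals.
From Stdlib Require Import Lra Lia List Cantor.
From Stdlib Require Import Classical ClassicalEpsilon FunctionalExtensionality ProofIrrelevance.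
Open Scope R_scope.
Import ListNotations.

Definition classic_eq_dec {T : Type} (a b : T) : {a = b} + {a <> b} :=
  excluded_middle_informative (a = b).

(** * Finite and unordered sums *)

Lemma fsum_nil {I} (g : I -> R) : fsum g [] = 0.
Proof. reflexivity. Qed.

Lemma fsum_cons {I} (g : I -> R) a l : fsum g (a :: l) = g a + fsum g l.
Proof. reflexivity. Qed.

Lemma fsum_app {I} (g : I -> R) l1 l2 : fsum g (l1 ++ l2) = fsum g l1 + fsum g l2.
Proof. induction l1 as [|a l1 IH]; simpl app; rewrite ?fsum_nil, ?fsum_cons, ?IH; lra. Qed.

Lemma fsum_plus {I} (g h : I -> R) l : fsum (fun i => g i + h i) l = fsum g l + fsum h l.
Proof. induction l as [|a l IH]; rewrite ?fsum_nil, ?fsum_cons, ?IH; lra. Qed.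

Lemma fsum_scal {I} (g : I -> R) c l : fsum (fun i => c * g i) l = c * fsum g l.
Proof. induction l as [|a l IH]; rewrite ?fsum_nil, ?fsum_cons, ?IH; lra. Qed.

Lemma fsum_const0 {I} (l : list I) : fsum (fun _ => 0) l = 0.
Proof. induction l as [|a l IH]; rewrite ?fsum_nil, ?fsum_cons, ?IH; lra. Qed.

Lemma fsum_ext {I} (g h : I -> R) l : (forall i, In i l -> g i = h i) -> fsum g l = fsum h l.
Proof.
  induction l as [|a l IH]; intros H; [reflexivity|].
  rewrite !fsum_cons, H, IH; [reflexivity| |left; reflexivity].
  intros i Hi; apply H; right; exact Hi.
Qed.

Lemma fsum_le {I} (g h : I -> R) l : (forall i, In i l -> g i <= h i) -> fsum g l <= fsum h l.
Proof.
  induction l as [|a l IH]; intros H; rewrite ?fsum_nil, ?fsum_cons; [lra|].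
  assert (g a <= h a) by (apply H; left; auto).
  assert (fsum g l <= fsum h l) by (apply IH; intros; apply H; right; auto). lra.
Qed.

Lemma fsum_map {I J} (g : I -> R) (f : J -> I) l : fsum g (map f l) = fsum (fun j => g (f j)) l.
Proof. unfold fsum. rewrite map_map. reflexivity. Qed.

Lemma fsum_remove {I} (g : I -> R) a l :
  NoDup l -> In a l -> fsum g l = g a + fsum g (remove classic_eq_dec a l).
Proof.
  induction l as [|b l IH]; intros Hn Hi; [contradiction|]. inversion Hn; subst. simpl.
  destruct (classic_eq_dec a b) as [->|ne].
  - rewrite fsum_cons, notin_remove; auto.
  - destruct Hi as [->|Hi]; [congruence|]. rewrite !fsum_cons, IH; auto. lra.
Qed.

Lemma NoDup_remove_elt {I} (a : I) l : NoDup l -> NoDup (remove classic_eq_dec a l).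
Proof.
  induction l as [|b l IH]; intros H; simpl; auto. inversion H; subst.
  destruct (classic_eq_dec a b); auto. constructor; auto.
  intro Hi. apply in_remove in Hi. tauto.
Qed.

Lemma fsum_incl {I} (g : I -> R) l1 l :
  (forall i, 0 <= g i) -> NoDup l1 -> incl l1 l -> fsum g l1 <= fsum g l.
Proof.
  intros Hg. revert l1. induction l as [|a l IH]; intros l1 Hn Hi.
  - destruct l1 as [|i]; [rewrite !fsum_nil; lra|]. destruct (Hi i (or_introl eq_refl)).
  - rewrite fsum_cons. destruct (in_dec classic_eq_dec a l1) as [Ha|Ha].
    + rewrite (fsum_remove g a l1) by auto.
      enough (fsum g (remove classic_eq_dec a l1) <= fsum g l) by lra.
      apply IH; [apply NoDup_remove_elt; auto|].
      intros i Hi'. apply in_remove in Hi'. destruct Hi' as [Hi' ne].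
      destruct (Hi i Hi'); [congruence|auto].
    + enough (fsum g l1 <= fsum g l) by (specialize (Hg a); lra).
      apply IH; auto. intros i Hi'. destruct (Hi i Hi'); [subst; contradiction|auto].
Qed.

Definition nonzerob (r : R) : bool := if Req_EM_T r 0 then false else true.

Lemma nonzerob_true r : nonzerob r = true <-> r <> 0.
Proof. unfold nonzerob. destruct (Req_EM_T r 0); split; congruence. Qed.

Lemma fsum_filter_nonzero {I} (g : I -> R) l : fsum g (filter (fun i => nonzerob (g i)) l) = fsum g l.
Proof.
  induction l as [|a l IH]; [reflexivity|]. simpl. unfold nonzerob at 1.
  destruct (Req_EM_T (g a) 0) as [E|E]; rewrite ?fsum_cons, IH; lra.
Qed.

Lemma fsum_count_ge {I : Type} (a : I -> R) e l :
  (forall i, In i l -> e <= a i) -> INR (length l) * e <= fsum a l.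
Proof.
  induction l as [|b l IH]; intros H; cbn [length]; rewrite ?fsum_nil, ?fsum_cons; [simpl; lra|].
  rewrite S_INR. assert (e <= a b) by (apply H; left; auto).
  assert (INR (length l) * e <= fsum a l) by (apply IH; intros; apply H; right; auto). lra.
Qed.

Lemma has_sum_unique {I} (g : I -> R) s t : has_sum g s -> has_sum g t -> s = t.
Proof. apply is_lub_u. Qed.

Lemma has_sum_ub {I} (g : I -> R) s l : has_sum g s -> NoDup l -> fsum g l <= s.
Proof. intros [H _] Hl. apply H. exists l; auto. Qed.

Lemma has_sum_least {I} (g : I -> R) s b :
  has_sum g s -> (forall l, NoDup l -> fsum g l <= b) -> s <= b.
Proof. intros [_ H] Hb. apply H. intros r [l [Hl ->]]. auto. Qed.

Lemma has_sum_intro {I} (g : I -> R) s :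
  (forall l, NoDup l -> fsum g l <= s) ->
  (forall b, (forall l, NoDup l -> fsum g l <= b) -> s <= b) -> has_sum g s.
Proof.
  intros H1 H2. split; [intros r [l [Hl ->]]; auto|].
  intros b Hb. apply H2. intros l Hl. apply Hb. exists l; auto.
Qed.

Lemma has_sum_exists {I} (g : I -> R) M : (forall l, NoDup l -> fsum g l <= M) -> exists s, has_sum g s.
Proof.
  intros H. destruct (completeness (fun r => exists l : list I, NoDup l /\ r = fsum g l)) as [m Hm].
  - exists M. intros r [l [Hl ->]]; auto.
  - exists 0, []. split; [constructor|reflexivity].
  - exists m; exact Hm.
Qed.

Lemma has_sum_nonneg {I} (g : I -> R) s : has_sum g s -> 0 <= s.
Proof. intros H. apply (has_sum_ub g s []) in H; [|constructor]. rewrite fsum_nil in H. exact H. Qed.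

Lemma has_sum_approx {I} (g : I -> R) s e : has_sum g s -> 0 < e -> exists l, NoDup l /\ s - e < fsum g l.
Proof.
  intros H He. apply NNPP. intro Hn. enough (s <= s - e) by lra.
  apply (has_sum_least g s (s - e) H). intros l Hl. apply Rnot_lt_le. intro Hc. apply Hn. exists l; auto.
Qed.

Lemma has_sum_ext {I} (g h : I -> R) s : (forall i, g i = h i) -> has_sum g s -> has_sum h s.
Proof. intros H. replace h with g; auto. apply functional_extensionality; auto. Qed.

Lemma has_sum_0 {I} (g : I -> R) : (forall i, g i = 0) -> has_sum g 0.
Proof.
  intros H. apply has_sum_intro.
  - intros l _. rewrite (fsum_ext g (fun _ => 0)), fsum_const0 by auto. lra.
  - intros b Hb. specialize (Hb [] (NoDup_nil _)). rewrite fsum_nil in Hb. exact Hb.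
Qed.

Lemma has_sum_eq0 {I} (g : I -> R) : (forall i, 0 <= g i) -> has_sum g 0 -> forall i, g i = 0.
Proof.
  intros Hg H i. pose proof (has_sum_ub g 0 [i] H (NoDup_cons _ (in_nil (a := i)) (NoDup_nil _))) as Hi.
  rewrite fsum_cons, fsum_nil in Hi. specialize (Hg i). lra.
Qed.

Lemma has_sum_single {I} (g : I -> R) a : (forall i, i <> a -> g i = 0) -> 0 <= g a -> has_sum g (g a).
Proof.
  intros H Ha. apply has_sum_intro.
  - intros l Hl. assert (Hrest : forall l', ~ In a l' -> fsum g l' = 0).
    { intros l' Hl'. rewrite (fsum_ext g (fun _ => 0)), fsum_const0; auto.
      intros i Hi. apply H. intros ->. contradiction. }
    destruct (in_dec classic_eq_dec a l) as [Hi|Hi].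
    + rewrite (fsum_remove g a l), Hrest by (auto using remove_In). lra.
    + rewrite Hrest by auto. lra.
  - intros b Hb. specialize (Hb [a] (NoDup_cons _ (in_nil (a := a)) (NoDup_nil _))).
    rewrite fsum_cons, fsum_nil in Hb. lra.
Qed.

Lemma has_sum_le_exists {I} (g h : I -> R) t :
  (forall i, g i <= h i) -> has_sum h t -> exists s, has_sum g s /\ s <= t.
Proof.
  intros Hle Ht. assert (Hb : forall l, NoDup l -> fsum g l <= t).
  { intros l Hl. pose proof (fsum_le g h l (fun i _ => Hle i)). pose proof (has_sum_ub h t l Ht Hl). lra. }
  destruct (has_sum_exists g t Hb) as [s Hs]. exists s; split; auto. apply (has_sum_least g s t Hs Hb).
Qed.

Lemma has_sum_scal {I} (g : I -> R) c s : 0 <= c -> has_sum g s -> has_sum (fun i => c * g i) (c * s).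
Proof.
  intros Hc Hs. destruct (Req_dec c 0) as [->|Hc0].
  - rewrite Rmult_0_l. apply has_sum_0. intros; ring.
  - apply has_sum_intro.
    + intros l Hl. rewrite fsum_scal. apply Rmult_le_compat_l; auto. apply has_sum_ub; auto.
    + intros b Hb. enough (s <= b / c) as H.
      { apply (Rmult_le_compat_l c) in H; [|lra]. field_simplify in H; auto. }
      apply (has_sum_least g s); auto. intros l Hl. specialize (Hb l Hl). rewrite fsum_scal in Hb.
      apply (Rmult_le_reg_l c); [lra|]. field_simplify; auto.
Qed.

Lemma has_sum_plus {I} (g h : I -> R) s t : (forall i, 0 <= g i) -> (forall i, 0 <= h i) ->
  has_sum g s -> has_sum h t -> has_sum (fun i => g i + h i) (s + t).
Proof.
  intros Hg Hh Hs Ht. apply has_sum_intro.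
  - intros l Hl. rewrite fsum_plus.
    pose proof (has_sum_ub g s l Hs Hl). pose proof (has_sum_ub h t l Ht Hl). lra.
  - intros b Hb. apply Rnot_lt_le. intro Hlt. set (e := (s + t - b) / 2).
    destruct (has_sum_approx g s e Hs) as [l1 [Hl1 H1]]; [unfold e; lra|].
    destruct (has_sum_approx h t e Ht) as [l2 [Hl2 H2]]; [unfold e; lra|].
    set (l := nodup classic_eq_dec (l1 ++ l2)).
    assert (Hincl : forall l', incl l' (l1 ++ l2) -> incl l' l).
    { intros l' H' i Hi. apply nodup_In. auto. }
    specialize (Hb l (NoDup_nodup _ _)). rewrite fsum_plus in Hb.
    assert (fsum g l1 <= fsum g l) by (apply fsum_incl, Hincl, incl_appl, incl_refl; auto).
    assert (fsum h l2 <= fsum h l) by (apply fsum_incl, Hincl, incl_appr, incl_refl; auto).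
    unfold e in *. lra.
Qed.

Lemma has_sum_same_fsums {I J} (g : I -> R) (h : J -> R) s :
  (forall l, NoDup l -> exists l', NoDup l' /\ fsum g l = fsum h l') ->
  (forall l, NoDup l -> exists l', NoDup l' /\ fsum h l = fsum g l') ->
  has_sum g s -> has_sum h s.
Proof.
  intros H1 H2 Hg. apply has_sum_intro.
  - intros l Hl. destruct (H2 l Hl) as [l' [Hl' ->]]. apply (has_sum_ub g s l' Hg Hl').
  - intros b Hb. apply (has_sum_least g s b Hg). intros l Hl.
    destruct (H1 l Hl) as [l' [Hl' ->]]. apply Hb; auto.
Qed.

Lemma fsum_nonzero_image {I J} (g : I -> R) (h : J -> R) (phi : J -> I) :
  (forall j, h j <> 0 -> g (phi j) = h j) ->
  (forall j j', h j <> 0 -> h j' <> 0 -> phi j = phi j' -> j = j') ->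
  forall l, NoDup l -> exists l', NoDup l' /\ fsum h l = fsum g l'.
Proof.
  intros Hval Hinj l Hl. set (lf := filter (fun j => nonzerob (h j)) l).
  assert (Hlf : forall j, In j lf -> h j <> 0) by (intros j Hj; apply filter_In in Hj; apply nonzerob_true, Hj).
  exists (map phi lf). split.
  - apply NoDup_map_NoDup_ForallPairs; [|apply NoDup_filter; auto].
    intros a b Ha Hb; apply Hinj; auto.
  - rewrite <- fsum_filter_nonzero, fsum_map. apply fsum_ext. intros j Hj. rewrite Hval; auto.
Qed.

Lemma has_sum_reindex {I J} (g : I -> R) (h : J -> R) (phi : J -> I) s :
  (forall j, h j <> 0 -> g (phi j) = h j) ->
  (forall j j', h j <> 0 -> h j' <> 0 -> phi j = phi j' -> j = j') ->
  (forall i, g i <> 0 -> exists j, h j <> 0 /\ phi j = i) ->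
  (has_sum g s <-> has_sum h s).
Proof.
  intros Hval Hinj Hsurj.
  assert (Hgh : forall l, NoDup l -> exists l', NoDup l' /\ fsum g l = fsum h l').
  { destruct (classic (inhabited J)) as [HJ|HJ].
    - set (psi := fun i => epsilon HJ (fun j => h j <> 0 /\ phi j = i)).
      assert (Hpsi : forall i, g i <> 0 -> h (psi i) <> 0 /\ phi (psi i) = i)
        by (intros i Hi; apply (epsilon_spec HJ (fun j => h j <> 0 /\ phi j = i)); auto).
      apply (fsum_nonzero_image h g psi).
      + intros i Hi. destruct (Hpsi i Hi) as [Hn Hp]. rewrite <- (Hval _ Hn), Hp. reflexivity.
      + intros i i' Hi Hi' E. rewrite <- (proj2 (Hpsi i Hi)), <- (proj2 (Hpsi i' Hi')), E. reflexivity.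
    - assert (Hg0 : forall i, g i = 0).
      { intros i. apply NNPP. intros Hi. destruct (Hsurj i Hi) as [j _]. exact (HJ (inhabits j)). }
      intros l _. exists []. split; [constructor|].
      rewrite (fsum_ext g (fun _ => 0)), fsum_const0, fsum_nil; auto. }
  pose proof (fsum_nonzero_image g h phi Hval Hinj) as Hhg.
  split; apply has_sum_same_fsums; auto.
Qed.

Definition fiber {I K} (p : I -> K) (g : I -> R) (k : K) : I -> R :=
  fun i => if classic_eq_dec (p i) k then g i else 0.

Lemma fsum_fibers_at {I K} (p : I -> K) (g : I -> R) i lk :
  NoDup lk -> In (p i) lk -> fsum (fun k => fiber p g k i) lk = g i.
Proof.
  induction lk as [|k lk IH]; intros Hn Hi; [contradiction|]. inversion Hn; subst.
  rewrite fsum_cons. unfold fiber at 1. destruct (classic_eq_dec (p i) k) as [<-|ne].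
  - rewrite (fsum_ext _ (fun _ => 0)), fsum_const0; [lra|].
    intros k Hk. unfold fiber. destruct classic_eq_dec; [subst; contradiction|auto].
  - destruct Hi as [Hi|Hi]; [congruence|]. rewrite IH; auto. lra.
Qed.

Lemma fsum_by_fibers {I K} (p : I -> K) (g : I -> R) l lk :
  NoDup lk -> (forall i, In i l -> In (p i) lk) -> fsum g l = fsum (fun k => fsum (fiber p g k) l) lk.
Proof.
  intros Hn. induction l as [|i l IH]; intros Hi.
  - rewrite fsum_nil, (fsum_ext (fun k => fsum (fiber p g k) []) (fun _ => 0)), fsum_const0; auto.
  - rewrite (fsum_ext (fun k => fsum (fiber p g k) (i :: l)) (fun k => fiber p g k i + fsum (fiber p g k) l))
      by reflexivity.
    rewrite fsum_cons, fsum_plus, fsum_fibers_at, IH; auto; intros; apply Hi; simpl; auto.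
Qed.

Lemma fsum_filter_fiber {I K} (p : I -> K) (g : I -> R) k l :
  fsum g (filter (fun i => if classic_eq_dec (p i) k then true else false) l) = fsum (fiber p g k) l.
Proof.
  induction l as [|i l IH]; auto. simpl. rewrite (fsum_cons (fiber p g k)). unfold fiber at 1.
  destruct classic_eq_dec; rewrite ?fsum_cons, IH; lra.
Qed.

Lemma fiber_sums_approx {I K} (p : I -> K) (g : I -> R) (s : K -> R) :
  (forall k, has_sum (fiber p g k) (s k)) ->
  forall lk, NoDup lk -> forall e, 0 < e ->
  exists l, NoDup l /\ (forall i, In i l -> In (p i) lk) /\ fsum s lk - e < fsum g l.
Proof.
  intros Hs lk. induction lk as [|k lk IH]; intros Hn e He.
  - exists []. split; [constructor|]. split; [intros; contradiction|]. rewrite !fsum_nil; lra.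
  - inversion Hn; subst. destruct (IH H2 (e / 2)) as [l' [Hl' [Hin' Hs']]]; [lra|].
    destruct (has_sum_approx _ _ (e / 2) (Hs k)) as [la [Hla Hsa]]; [lra|].
    set (lf := filter (fun i => if classic_eq_dec (p i) k then true else false) la).
    assert (Hlf : forall i, In i lf -> p i = k).
    { intros i Hi. apply filter_In in Hi. destruct classic_eq_dec; [auto|easy]. }
    exists (lf ++ l'). split; [|split].
    + apply NoDup_app; [apply NoDup_filter; auto|auto|].
      intros i Hi Hi'. apply Hin' in Hi'. rewrite (Hlf i Hi) in Hi'. contradiction.
    + intros i Hi. apply in_app_or in Hi. destruct Hi as [Hi|Hi]; [left; symmetry; auto|right; auto].
    + rewrite fsum_app, fsum_cons. unfold lf. rewrite fsum_filter_fiber. lra.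
Qed.

Lemma has_sum_by_fibers {I K} (p : I -> K) (g : I -> R) (s : K -> R) S :
  (forall i, 0 <= g i) -> (forall k, has_sum (fiber p g k) (s k)) ->
  (has_sum g S <-> has_sum s S).
Proof.
  intros Hg Hs.
  assert (A : forall S, has_sum g S -> forall lk, NoDup lk -> fsum s lk <= S).
  { intros S0 HS lk Hlk. apply Rnot_lt_le; intro Hc.
    destruct (fiber_sums_approx p g s Hs lk Hlk (fsum s lk - S0)) as [l [Hl [_ Hl2]]]; [lra|].
    pose proof (has_sum_ub g S0 l HS Hl). lra. }
  assert (B : forall T, has_sum s T -> forall l, NoDup l -> fsum g l <= T).
  { intros T HT l Hl. set (lk := nodup classic_eq_dec (map p l)).
    rewrite (fsum_by_fibers p g l lk); [|apply NoDup_nodup|intros i Hi; apply nodup_In, in_map; auto].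
    apply Rle_trans with (fsum s lk); [|apply has_sum_ub; [auto|apply NoDup_nodup]].
    apply fsum_le. intros k _. apply has_sum_ub; auto. }
  split.
  - intros HS. destruct (has_sum_exists s S (A S HS)) as [T HT].
    assert (T <= S) by (apply (has_sum_least s T S HT); apply A; auto).
    assert (S <= T) by (apply (has_sum_least g S T HS); apply B; auto).
    replace S with T by lra. auto.
  - intros HT. destruct (has_sum_exists g S (B S HT)) as [S' HS'].
    assert (S' <= S) by (apply (has_sum_least g S' S HS'); apply B; auto).
    assert (S <= S') by (apply (has_sum_least s S S' HT); apply A; auto).
    replace S with S' by lra. auto.
Qed.

Lemma has_sum_fiberwise {I K : Type} (p : I -> K) (g g' : I -> R) A :
  (forall i, 0 <= g i) -> (forall i, 0 <= g' i) ->
  (forall k a, has_sum (fiber p g k) a -> has_sum (fiber p g' k) a) -> has_sum g A -> has_sum g' A.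
Proof.
  intros Hg Hg' Hfib HA.
  assert (Ex : forall k, exists a, has_sum (fiber p g k) a).
  { intros k. destruct (has_sum_le_exists (fiber p g k) g A) as [a [Ha _]]; eauto.
    intros i; unfold fiber; destruct classic_eq_dec; [lra|apply Hg]. }
  set (s := fun k => epsilon (inhabits 0) (fun a => has_sum (fiber p g k) a)).
  assert (Hs : forall k, has_sum (fiber p g k) (s k)) by (intros k; apply epsilon_spec; auto).
  apply (has_sum_by_fibers p g' s A Hg'); [intros k; apply Hfib; auto|].
  apply (has_sum_by_fibers p g s A Hg Hs). auto.
Qed.

(** * Absolutely summable real and complex families; the inner product of l^2 *)

Definition pos_part {I} (a : I -> R) i := Rmax (a i) 0.
Definition neg_part {I} (a : I -> R) i := Rmax (- a i) 0.

Definition has_rsum {I} (a : I -> R) (s : R) : Prop :=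
  exists p q, has_sum (pos_part a) p /\ has_sum (neg_part a) q /\ s = p - q.

Lemma pos_part_nonneg {I} (a : I -> R) i : 0 <= pos_part a i.
Proof. apply Rmax_r. Qed.

Lemma neg_part_nonneg {I} (a : I -> R) i : 0 <= neg_part a i.
Proof. apply Rmax_r. Qed.

Lemma has_rsum_unique {I} (a : I -> R) s t : has_rsum a s -> has_rsum a t -> s = t.
Proof.
  intros [p [q [H1 [H2 ->]]]] [p' [q' [H1' [H2' ->]]]].
  rewrite (has_sum_unique _ _ _ H1 H1'), (has_sum_unique _ _ _ H2 H2'). reflexivity.
Qed.

Lemma has_rsum_exists {I} (a b : I -> R) B :
  (forall i, Rabs (a i) <= b i) -> has_sum b B -> exists s, has_rsum a s.
Proof.
  intros Hb HB.
  destruct (has_sum_le_exists (pos_part a) b B) as [p [Hp _]]; auto.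
  { intros i. specialize (Hb i).
    apply Rmax_lub; [|pose proof (Rabs_pos (a i))]; [pose proof (RRle_abs (a i))|]; lra. }
  destruct (has_sum_le_exists (neg_part a) b B) as [q [Hq _]]; auto.
  { intros i. specialize (Hb i). rewrite <- Rabs_Ropp in Hb.
    apply Rmax_lub; [|pose proof (Rabs_pos (- a i))]; [pose proof (RRle_abs (- a i))|]; lra. }
  exists (p - q), p, q. auto.
Qed.

Lemma has_rsum_nonneg {I} (a : I -> R) s : (forall i, 0 <= a i) -> (has_rsum a s <-> has_sum a s).
Proof.
  intros Ha. assert (Hp : forall i, pos_part a i = a i) by (intros i; apply Rmax_left, Ha).
  assert (Hn : forall i, neg_part a i = 0) by (intros i; apply Rmax_right; specialize (Ha i); lra).
  split.
  - intros [p [q [Hps [Hq ->]]]]. rewrite (has_sum_unique _ _ _ Hq (has_sum_0 _ Hn)), Rminus_0_r.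
    apply (has_sum_ext _ _ _ Hp Hps).
  - intros Hs. exists s, 0. split; [|split; [apply has_sum_0, Hn|ring]].
    apply (has_sum_ext a); auto.
Qed.

Lemma has_rsum_ext {I} (a b : I -> R) s : (forall i, a i = b i) -> has_rsum a s -> has_rsum b s.
Proof. intros H. replace b with a; auto. apply functional_extensionality; auto. Qed.

Lemma has_rsum_0 {I} (a : I -> R) : (forall i, a i = 0) -> has_rsum a 0.
Proof. intros H. apply has_rsum_nonneg; [intros; rewrite H; lra|apply has_sum_0; auto]. Qed.

Lemma has_rsum_single {I} (a : I -> R) x : (forall i, i <> x -> a i = 0) -> has_rsum a (a x).
Proof.
  intros H. exists (pos_part a x), (neg_part a x). split; [|split].
  - apply has_sum_single; [|apply pos_part_nonneg].
    intros i Hi; unfold pos_part; rewrite H; auto. apply Rmax_right; lra.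
  - apply has_sum_single; [|apply neg_part_nonneg].
    intros i Hi; unfold neg_part; rewrite H; auto. apply Rmax_right; lra.
  - unfold pos_part, neg_part, Rmax; repeat destruct Rle_dec; lra.
Qed.

Lemma has_rsum_add {I} (a b : I -> R) s t :
  has_rsum a s -> has_rsum b t -> has_rsum (fun i => a i + b i) (s + t).
Proof.
  intros [p [q [Hp [Hq ->]]]] [p' [q' [Hp' [Hq' ->]]]].
  set (c := fun i => a i + b i).
  assert (Hpp : has_sum (fun i => pos_part a i + pos_part b i) (p + p'))
    by (apply has_sum_plus; auto using pos_part_nonneg).
  assert (Hnn : has_sum (fun i => neg_part a i + neg_part b i) (q + q'))
    by (apply has_sum_plus; auto using neg_part_nonneg).
  assert (Hlep : forall i, pos_part c i <= pos_part a i + pos_part b i)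
    by (intros i; unfold pos_part, c, Rmax; repeat destruct Rle_dec; lra).
  assert (Hlen : forall i, neg_part c i <= neg_part a i + neg_part b i)
    by (intros i; unfold neg_part, c, Rmax; repeat destruct Rle_dec; lra).
  destruct (has_sum_le_exists _ _ _ Hlep Hpp) as [P [HP _]].
  destruct (has_sum_le_exists _ _ _ Hlen Hnn) as [N [HN _]].
  exists P, N. split; [auto|split; [auto|]].
  (* pos c - neg c = c = (pos a - neg a) + (pos b - neg b), rearranged into two sums of nonnegative terms *)
  assert (H1 : has_sum (fun i => pos_part c i + (neg_part a i + neg_part b i)) (P + (q + q'))).
  { apply has_sum_plus; auto using pos_part_nonneg.
    intros i; pose proof (neg_part_nonneg a i); pose proof (neg_part_nonneg b i); lra. }
  assert (H2 : has_sum (fun i => neg_part c i + (pos_part a i + pos_part b i)) (N + (p + p'))).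
  { apply has_sum_plus; auto using neg_part_nonneg.
    intros i; pose proof (pos_part_nonneg a i); pose proof (pos_part_nonneg b i); lra. }
  apply has_sum_ext with (h := fun i => neg_part c i + (pos_part a i + pos_part b i)) in H1.
  - pose proof (has_sum_unique _ _ _ H1 H2). lra.
  - intros i. unfold pos_part, neg_part, c, Rmax. repeat destruct Rle_dec; lra.
Qed.

Lemma has_rsum_scal {I} (a : I -> R) s c : has_rsum a s -> has_rsum (fun i => c * a i) (c * s).
Proof.
  intros [p [q [Hp [Hq ->]]]]. destruct (Rle_dec 0 c) as [Hc|Hc].
  - exists (c * p), (c * q). split; [|split; [|ring]].
    + apply has_sum_ext with (fun i => c * pos_part a i); [|apply has_sum_scal; auto].
      intros i; unfold pos_part, Rmax; repeat destruct Rle_dec; nra.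
    + apply has_sum_ext with (fun i => c * neg_part a i); [|apply has_sum_scal; auto].
      intros i; unfold neg_part, Rmax; repeat destruct Rle_dec; nra.
  - exists (- c * q), (- c * p). split; [|split; [|ring]].
    + apply has_sum_ext with (fun i => - c * neg_part a i); [|apply has_sum_scal; auto; lra].
      intros i; unfold pos_part, neg_part, Rmax; repeat destruct Rle_dec; nra.
    + apply has_sum_ext with (fun i => - c * pos_part a i); [|apply has_sum_scal; auto; lra].
      intros i; unfold pos_part, neg_part, Rmax; repeat destruct Rle_dec; nra.
Qed.

Definition Cconj (z : Cx) : Cx := (fst z, - snd z).
Definition Copp (z : Cx) : Cx := (- fst z, - snd z).
Definition Csub (z w : Cx) : Cx := Cadd z (Copp w).

Ltac csimpl := unfold Csub, Copp, Cconj, Cadd, Cmul, Cnorm2, RtoC, C0, Defs.C1 in *; simpl in *.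

Lemma Cnorm2_nonneg z : 0 <= Cnorm2 z.
Proof. unfold Cnorm2; nra. Qed.

Lemma Cnorm2_eq0 z : Cnorm2 z = 0 -> z = C0.
Proof. destruct z as [a b]; csimpl; intros. f_equal; nra. Qed.

Lemma Cnorm2_C0 : Cnorm2 C0 = 0.
Proof. csimpl; ring. Qed.

Lemma Cnorm2_mul z w : Cnorm2 (Cmul z w) = Cnorm2 z * Cnorm2 w.
Proof. destruct z, w; csimpl; ring. Qed.

Lemma Cnorm2_conj z : Cnorm2 (Cconj z) = Cnorm2 z.
Proof. destruct z; csimpl; ring. Qed.

Lemma Cmul_eq0 z u : Cmul z u = C0 -> z <> C0 -> u = C0.
Proof.
  intros H Hz. apply Cnorm2_eq0. assert (E : Cnorm2 (Cmul z u) = 0) by (rewrite H; apply Cnorm2_C0).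
  rewrite Cnorm2_mul in E. apply Rmult_integral in E. destruct E as [E|E]; auto.
  exfalso; apply Hz, Cnorm2_eq0; auto.
Qed.

Definition has_csum {I} (f : I -> Cx) (z : Cx) : Prop :=
  has_rsum (fun i => fst (f i)) (fst z) /\ has_rsum (fun i => snd (f i)) (snd z).

Lemma has_csum_unique {I} (f : I -> Cx) z w : has_csum f z -> has_csum f w -> z = w.
Proof. destruct z, w; intros [A B] [C D]; simpl in *. f_equal; eapply has_rsum_unique; eauto. Qed.

Lemma has_csum_ext {I} (f g : I -> Cx) z : (forall i, f i = g i) -> has_csum f z -> has_csum g z.
Proof. intros H. replace g with f; auto. apply functional_extensionality; auto. Qed.

Lemma has_csum_add {I} (f g : I -> Cx) z w :
  has_csum f z -> has_csum g w -> has_csum (fun i => Cadd (f i) (g i)) (Cadd z w).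
Proof. intros [A B] [C D]. split; apply has_rsum_add; auto. Qed.

Lemma has_csum_scal {I} (f : I -> Cx) z c : has_csum f z -> has_csum (fun i => Cmul c (f i)) (Cmul c z).
Proof.
  intros [A B]. destruct c as [c1 c2]; split; simpl.
  - apply has_rsum_ext with (fun i => c1 * fst (f i) + (- c2) * snd (f i)); [intros; ring|].
    replace (c1 * fst z - c2 * snd z) with (c1 * fst z + (- c2) * snd z) by ring.
    apply has_rsum_add; apply has_rsum_scal; auto.
  - apply has_rsum_ext with (fun i => c1 * snd (f i) + c2 * fst (f i)); [intros; ring|].
    apply has_rsum_add; apply has_rsum_scal; auto.
Qed.

Lemma has_csum_single {I} (f : I -> Cx) x : (forall i, i <> x -> f i = C0) -> has_csum f (f x).
Proof.
  intros H; split; [apply (has_rsum_single (fun i => fst (f i)))|apply (has_rsum_single (fun i => snd (f i)))];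
    intros; rewrite H; auto.
Qed.

Lemma has_csum_real {I} (r : I -> R) s :
  (forall i, 0 <= r i) -> has_sum r s -> has_csum (fun i => RtoC (r i)) (RtoC s).
Proof. intros H1 H2; split; simpl; [apply has_rsum_nonneg; auto|apply has_rsum_0; auto]. Qed.

Definition inner_terms {I} (f g : I -> Cx) : I -> Cx := fun i => Cmul (f i) (Cconj (g i)).
(* The junk value [C0] is never used: [inner_spec] shows the sum exists for l^2 arguments. *)
Definition inner {I} (f g : I -> Cx) : Cx := epsilon (inhabits C0) (fun z => has_csum (inner_terms f g) z).

Lemma inner_term_bound (a b : Cx) :
  Rabs (fst (Cmul a (Cconj b))) <= (Cnorm2 a + Cnorm2 b) / 2 /\
  Rabs (snd (Cmul a (Cconj b))) <= (Cnorm2 a + Cnorm2 b) / 2.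
Proof.
  destruct a as [a1 a2], b as [b1 b2]; csimpl.
  pose proof (Rle_0_sqr (a1 - b1)). pose proof (Rle_0_sqr (a2 - b2)).
  pose proof (Rle_0_sqr (a1 + b1)). pose proof (Rle_0_sqr (a2 + b2)).
  pose proof (Rle_0_sqr (a1 - b2)). pose proof (Rle_0_sqr (a2 - b1)).
  pose proof (Rle_0_sqr (a1 + b2)). pose proof (Rle_0_sqr (a2 + b1)).
  unfold Rsqr in *. split; apply Rabs_le; split; nra.
Qed.

Lemma inner_spec {I} (f g : I -> Cx) : l2 f -> l2 g -> has_csum (inner_terms f g) (inner f g).
Proof.
  intros [A HA] [B HB]. unfold inner. apply epsilon_spec.
  assert (Hb : has_sum (fun i => (Cnorm2 (f i) + Cnorm2 (g i)) / 2) ((A + B) / 2)).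
  { apply has_sum_ext with (fun i => / 2 * (Cnorm2 (f i) + Cnorm2 (g i))); [intros; field|].
    replace ((A + B) / 2) with (/ 2 * (A + B)) by field. apply has_sum_scal; [lra|].
    apply has_sum_plus; auto using Cnorm2_nonneg. }
  destruct (has_rsum_exists (fun i => fst (inner_terms f g i)) _ _
              (fun i => proj1 (inner_term_bound (f i) (g i))) Hb) as [s1 H1].
  destruct (has_rsum_exists (fun i => snd (inner_terms f g i)) _ _
              (fun i => proj2 (inner_term_bound (f i) (g i))) Hb) as [s2 H2].
  exists (s1, s2). split; auto.
Qed.

Lemma inner_eq {I} (f g : I -> Cx) z : l2 f -> l2 g -> has_csum (inner_terms f g) z -> inner f g = z.
Proof. intros. eapply has_csum_unique; [apply inner_spec|]; eauto. Qed.

Lemma nsq_ext {I} (f g : I -> Cx) s : (forall i, f i = g i) -> nsq f s -> nsq g s.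
Proof. intros H. replace g with f; auto. apply functional_extensionality; auto. Qed.

Lemma nsq_unique {I} (f : I -> Cx) s t : nsq f s -> nsq f t -> s = t.
Proof. apply has_sum_unique. Qed.

Lemma nsq_nonneg {I} (f : I -> Cx) s : nsq f s -> 0 <= s.
Proof. apply has_sum_nonneg. Qed.

Lemma nsq_0 {I} (f : I -> Cx) : (forall i, f i = C0) -> nsq f 0.
Proof. intros H. apply has_sum_0. intros; rewrite H; apply Cnorm2_C0. Qed.

Lemma nsq_eq0 {I} (v : I -> Cx) : nsq v 0 -> forall i, v i = C0.
Proof. intros H i. apply Cnorm2_eq0, (has_sum_eq0 (fun i => Cnorm2 (v i))); auto using Cnorm2_nonneg. Qed.

Lemma nsq_e {I : Type} (u : I) : nsq (e_ u) 1.
Proof.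
  unfold nsq. replace 1 with (Cnorm2 (e_ u u)).
  - apply (has_sum_single (fun i => Cnorm2 (e_ u i))); [|apply Cnorm2_nonneg].
    intros i Hi. unfold e_. destruct excluded_middle_informative; [congruence|]. apply Cnorm2_C0.
  - unfold e_. destruct excluded_middle_informative; [|congruence]. csimpl; ring.
Qed.

Lemma l2_e {I : Type} (a : I) : l2 (e_ a).
Proof. exists 1; apply nsq_e. Qed.

Lemma e_neq {I : Type} (a w : I) : w <> a -> e_ a w = C0.
Proof. intros; unfold e_; destruct excluded_middle_informative; congruence. Qed.

Lemma e_eq {I : Type} (a : I) : e_ a a = Defs.C1.
Proof. intros; unfold e_; destruct excluded_middle_informative; congruence. Qed.

Lemma l2_dom {I} (f : I -> Cx) b B : (forall i, Cnorm2 (f i) <= b i) -> has_sum b B -> l2 f.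
Proof.
  intros H Hs. destruct (has_sum_le_exists (fun i => Cnorm2 (f i)) _ B H Hs) as [t [Ht _]]. exists t; auto.
Qed.

Lemma l2_add {I} (f g : I -> Cx) : l2 f -> l2 g -> l2 (fun i => Cadd (f i) (g i)).
Proof.
  intros [A HA] [B HB]. apply l2_dom with (fun i => 2 * (Cnorm2 (f i) + Cnorm2 (g i))) (2 * (A + B)).
  - intros i. destruct (f i) as [a b], (g i) as [c d]; csimpl.
    pose proof (Rle_0_sqr (a - c)). pose proof (Rle_0_sqr (b - d)). unfold Rsqr in *. nra.
  - apply has_sum_scal; [lra|]. apply has_sum_plus; auto using Cnorm2_nonneg.
Qed.

Lemma nsq_scal {I} (f : I -> Cx) c s : nsq f s -> nsq (fun i => Cmul c (f i)) (Cnorm2 c * s).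
Proof.
  intros HA. apply has_sum_ext with (fun i => Cnorm2 c * Cnorm2 (f i)).
  - intros; rewrite Cnorm2_mul; auto.
  - apply has_sum_scal; auto using Cnorm2_nonneg.
Qed.

Lemma l2_scal {I} (f : I -> Cx) c : l2 f -> l2 (fun i => Cmul c (f i)).
Proof. intros [A HA]. exists (Cnorm2 c * A). apply nsq_scal; auto. Qed.

Lemma inner_add {I} (f g h : I -> Cx) :
  l2 f -> l2 g -> l2 h -> inner (fun i => Cadd (f i) (g i)) h = Cadd (inner f h) (inner g h).
Proof.
  intros Hf Hg Hh. apply inner_eq; [apply l2_add; auto|auto|].
  apply has_csum_ext with (fun i => Cadd (inner_terms f h i) (inner_terms g h i)).
  - intros i; unfold inner_terms; destruct (f i), (g i), (h i); csimpl; f_equal; ring.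
  - apply has_csum_add; apply inner_spec; auto.
Qed.

Lemma inner_scal {I} (f h : I -> Cx) c : l2 f -> l2 h -> inner (fun i => Cmul c (f i)) h = Cmul c (inner f h).
Proof.
  intros Hf Hh. apply inner_eq; [apply l2_scal; auto|auto|].
  apply has_csum_ext with (fun i => Cmul c (inner_terms f h i)).
  - intros i; unfold inner_terms; destruct c, (f i), (h i); csimpl; f_equal; ring.
  - apply has_csum_scal; apply inner_spec; auto.
Qed.

Lemma inner_sub_scal {I} (h v w : I -> Cx) z : l2 h -> l2 v -> l2 w ->
  inner (fun i => Csub (h i) (Cmul z (v i))) w = Csub (inner h w) (Cmul z (inner v w)).
Proof.
  intros Hh Hv Hw.
  replace (fun i => Csub (h i) (Cmul z (v i))) with (fun i => Cadd (h i) (Cmul (Copp z) (v i)))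
    by (apply functional_extensionality; intros i; destruct z, (v i); csimpl; f_equal; ring).
  rewrite inner_add, inner_scal by (auto using l2_scal).
  destruct z, (inner v w); csimpl; f_equal; ring.
Qed.

Lemma inner_self {I} (v : I -> Cx) N : nsq v N -> inner v v = RtoC N.
Proof.
  intros H. apply inner_eq; try (exists N; auto).
  apply has_csum_ext with (fun i => RtoC (Cnorm2 (v i))).
  - intros i; unfold inner_terms; destruct (v i); csimpl; f_equal; ring.
  - apply has_csum_real; auto using Cnorm2_nonneg.
Qed.

Lemma nsq_sub_scal {I} (h v : I -> Cx) z A N : nsq h A -> nsq v N ->
  nsq (fun i => Csub (h i) (Cmul z (v i))) (A - 2 * fst (Cmul (Cconj z) (inner h v)) + Cnorm2 z * N).
Proof.
  intros HA HN. assert (Hh : l2 h) by (exists A; auto). assert (Hv : l2 v) by (exists N; auto).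
  apply has_rsum_nonneg; [intros; apply Cnorm2_nonneg|].
  apply has_rsum_ext with (fun i => (Cnorm2 (h i) + (-2) * fst (Cmul (Cconj z) (inner_terms h v i)))
                                    + Cnorm2 z * Cnorm2 (v i)).
  { intros i. unfold inner_terms. destruct (h i), (v i), z; csimpl. ring. }
  replace (A - 2 * fst (Cmul (Cconj z) (inner h v))) with (A + (-2) * fst (Cmul (Cconj z) (inner h v))) by ring.
  apply has_rsum_add; [apply has_rsum_add|].
  - apply has_rsum_nonneg; auto using Cnorm2_nonneg.
  - apply has_rsum_scal, (proj1 (has_csum_scal _ _ (Cconj z) (inner_spec h v Hh Hv))).
  - apply has_rsum_scal, has_rsum_nonneg; auto using Cnorm2_nonneg.
Qed.

(** * Householder reflections *)

(* The reflection in the hyperplane orthogonal to [v], where [N = ||v||^2]; the identity if [v = 0]. *)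
Definition householder_coef {I} (N : R) (v h : I -> Cx) : Cx :=
  if Req_EM_T N 0 then C0 else Cmul (RtoC (2 / N)) (inner h v).

Definition householder {I} (N : R) (v h : I -> Cx) : I -> Cx :=
  fun i => Csub (h i) (Cmul (householder_coef N v h) (v i)).

Lemma nsq_householder {I} (N A : R) (v h : I -> Cx) : nsq v N -> nsq h A -> nsq (householder N v h) A.
Proof.
  intros HN HA. unfold householder, householder_coef. destruct (Req_EM_T N 0) as [E|E].
  - apply nsq_ext with h; auto. intros i; destruct (h i), (v i); csimpl; f_equal; ring.
  - set (z := Cmul (RtoC (2 / N)) (inner h v)).
    replace A with (A - 2 * fst (Cmul (Cconj z) (inner h v)) + Cnorm2 z * N)
      by (unfold z; destruct (inner h v); csimpl; field; auto).
    apply nsq_sub_scal; auto.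
Qed.

Lemma householder_involutive {I} (N : R) (v h : I -> Cx) :
  nsq v N -> l2 h -> forall i, householder N v (householder N v h) i = h i.
Proof.
  intros HN Hh i. assert (Hv : l2 v) by (exists N; auto).
  assert (E : householder_coef N v (householder N v h) = Copp (householder_coef N v h)).
  { unfold householder_coef. destruct (Req_EM_T N 0) as [E|E]; [csimpl; f_equal; ring|].
    unfold householder. rewrite inner_sub_scal, (inner_self v N HN) by auto. unfold householder_coef.
    destruct (Req_EM_T N 0); [congruence|]. destruct (inner h v); csimpl. f_equal; field; auto. }
  unfold householder at 1. rewrite E. unfold householder.
  destruct (householder_coef N v h), (h i), (v i); csimpl; f_equal; ring.
Qed.

Lemma householder_add {I} (N : R) (v h1 h2 : I -> Cx) : l2 v -> l2 h1 -> l2 h2 ->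
  forall i, householder N v (fun j => Cadd (h1 j) (h2 j)) i
            = Cadd (householder N v h1 i) (householder N v h2 i).
Proof.
  intros Hv H1 H2 i. unfold householder, householder_coef. destruct (Req_EM_T N 0).
  - destruct (h1 i), (h2 i), (v i); csimpl; f_equal; ring.
  - rewrite inner_add; auto. destruct (inner h1 v), (inner h2 v), (h1 i), (h2 i), (v i); csimpl; f_equal; ring.
Qed.

Lemma householder_scal {I} (N : R) (v h : I -> Cx) c : l2 v -> l2 h ->
  forall i, householder N v (fun j => Cmul c (h j)) i = Cmul c (householder N v h i).
Proof.
  intros Hv H1 i. unfold householder, householder_coef. destruct (Req_EM_T N 0).
  - destruct c, (h i), (v i); csimpl; f_equal; ring.
  - rewrite inner_scal; auto. destruct c, (inner h v), (h i), (v i); csimpl; f_equal; ring.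
Qed.

(** * Summable families have countable support *)

Fixpoint list_index {I : Type} (l : list I) (i : I) : nat :=
  match l with [] => 0%nat | a :: l' => if classic_eq_dec a i then 0%nat else S (list_index l' i) end.

Lemma nth_error_list_index {I : Type} (l : list I) i : In i l -> nth_error l (list_index l i) = Some i.
Proof.
  induction l as [|a l IH]; simpl; intros H; [contradiction|].
  destruct classic_eq_dec; [subst; auto|]. destruct H; [congruence|auto].
Qed.

Lemma exists_max_nat (P : nat -> Prop) K :
  P 0%nat -> (forall k, P k -> (k <= K)%nat) -> exists k, P k /\ forall k', P k' -> (k' <= k)%nat.
Proof.
  revert P. induction K as [|K IH]; intros P H0 HK.
  - exists 0%nat; split; [auto|intros k' Hk'; apply HK; auto].
  - destruct (classic (P (S K))) as [HS|HS]; [exists (S K); split; auto|].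
    apply IH; auto. intros k Hk. specialize (HK k Hk).
    destruct (Nat.eq_dec k (S K)); [subst; contradiction|lia].
Qed.

Lemma has_sum_level_set_finite {I : Type} (a : I -> R) s n :
  has_sum a s -> exists L, forall i, / INR (S n) < a i -> In i L.
Proof.
  intros HS. set (good := fun l => NoDup l /\ forall i, In i l -> / INR (S n) < a i).
  assert (Hpos : 0 < INR (S n)) by (apply lt_0_INR; lia).
  destruct (INR_unbounded (s * INR (S n))) as [K HK].
  destruct (exists_max_nat (fun k => exists l, good l /\ length l = k) K) as [k [[L [[HL1 HL2] HLk]] Hmax]].
  - exists []; split; auto. split; [constructor|intros; contradiction].
  - intros k [l [[Hl1 Hl2] <-]]. apply INR_le, Rlt_le, Rle_lt_trans with (s * INR (S n)); auto.
    (* each of the [length l] terms exceeds [1/(n+1)] and their sum is at most [s] *)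
    pose proof (has_sum_ub a s l HS Hl1) as Hub.
    pose proof (fsum_count_ge a (/ INR (S n)) l (fun i Hi => Rlt_le _ _ (Hl2 i Hi))) as Hcount.
    apply (Rmult_le_compat_r (INR (S n))) in Hcount; [|lra]. field_simplify in Hcount; nra.
  - exists L. intros i Hi. apply NNPP; intro Hn. enough (S k <= k)%nat by lia.
    apply Hmax. exists (i :: L). split; [split|simpl; congruence].
    + constructor; auto.
    + intros i' [<-|Hi']; auto.
Qed.

Lemma has_sum_countable_support {I : Type} (a : I -> R) s : has_sum a s ->
  exists phi : I -> nat, forall i j, 0 < a i -> 0 < a j -> phi i = phi j -> i = j.
Proof.
  intros HS.
  assert (Hn : forall i, 0 < a i -> exists n, / INR (S n) < a i).
  { intros i Hi. destruct (INR_unbounded (/ a i)) as [n Hn]. exists n. rewrite S_INR.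
    assert (H1 : a i * / a i < a i * INR n) by (apply Rmult_lt_compat_l; auto).
    rewrite Rinv_r in H1; [|lra]. pose proof (pos_INR n).
    apply (Rmult_lt_reg_r (INR n + 1)); [lra|]. rewrite Rinv_l; [|lra]. nra. }
  destruct (choice _ (fun n => has_sum_level_set_finite a s n HS)) as [L HL].
  set (ni := fun i => epsilon (inhabits 0%nat) (fun n => / INR (S n) < a i)).
  assert (Hni : forall i, 0 < a i -> / INR (S (ni i)) < a i)
    by (intros i Hi; apply (epsilon_spec (inhabits 0%nat) (fun n => / INR (S n) < a i)); auto).
  (* [i] is encoded by the pair (level [n] with [a i > 1/(n+1)], position of [i] in the list of that level) *)
  exists (fun i => Cantor.to_nat (ni i, list_index (L (ni i)) i)).
  intros i j Hi Hj E. apply Cantor.to_nat_inj in E. inversion E as [[E1 E2]].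
  pose proof (nth_error_list_index (L (ni i)) i (HL _ _ (Hni i Hi))) as P1.
  pose proof (nth_error_list_index (L (ni j)) j (HL _ _ (Hni j Hj))) as P2.
  rewrite <- E1, <- E2, P1 in P2. inversion P2; auto.
Qed.

(** * The functions xi_n and polar decomposition *)

Lemma xi_sq n y : 1 <= y -> xi n y ^ 2 = (1 + (INR n + 1) * (y ^ 2 - 1)) / (1 + INR n * (y ^ 2 - 1)).
Proof.
  intros Hy. unfold xi. rewrite pow2_sqrt; auto. pose proof (pos_INR n). assert (0 <= y ^ 2 - 1) by nra.
  apply Rle_mult_inv_pos; nra.
Qed.

Lemma xi_ge1 n y : 1 <= y -> 1 <= xi n y.
Proof.
  intros Hy. pose proof (xi_sq n y Hy). pose proof (pos_INR n). assert (0 <= y ^ 2 - 1) by nra.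
  assert (1 <= xi n y ^ 2).
  { rewrite H. apply (Rmult_le_reg_r (1 + INR n * (y ^ 2 - 1))); [nra|]. field_simplify; nra. }
  assert (0 <= xi n y) by (unfold xi; apply sqrt_pos). nra.
Qed.

Lemma xi_xi m n y : 1 <= y -> xi m (xi n y) = xi (m + n) y.
Proof.
  intros Hy. pose proof (xi_ge1 n y Hy) as Hn.
  assert (0 <= xi m (xi n y)) by (unfold xi; apply sqrt_pos).
  assert (0 <= xi (m + n) y) by (unfold xi; apply sqrt_pos).
  apply Rsqr_inj; auto. rewrite !Rsqr_pow2, !xi_sq, plus_INR; auto.
  pose proof (pos_INR m). pose proof (pos_INR n). assert (0 <= y ^ 2 - 1) by nra.
  field. split; nra.
Qed.

Definition cmod (z : Cx) : R := sqrt (Cnorm2 z).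
Definition cphase (z : Cx) : Cx := (fst z / cmod z, snd z / cmod z).

Lemma cmod_pos z : z <> C0 -> 0 < cmod z.
Proof.
  intros Hz. apply sqrt_lt_R0. destruct (Cnorm2_nonneg z) as [H|H]; auto.
  exfalso; apply Hz, Cnorm2_eq0; auto.
Qed.

Lemma cmod_sq z : cmod z * cmod z = Cnorm2 z.
Proof. apply sqrt_sqrt, Cnorm2_nonneg. Qed.

Lemma polar_decomposition z : z <> C0 -> z = Cmul (RtoC (cmod z)) (cphase z).
Proof.
  intros Hz. pose proof (cmod_pos z Hz). unfold cphase. destruct z as [a b]. csimpl. f_equal; field; lra.
Qed.

Lemma Cnorm2_cphase z : z <> C0 -> Cnorm2 (cphase z) = 1.
Proof.
  intros Hz. pose proof (cmod_pos z Hz). pose proof (cmod_sq z). unfold cphase. destruct z as [a b].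
  csimpl. apply (Rmult_eq_reg_r (cmod (a, b) * cmod (a, b))); [|nra]. field_simplify; lra.
Qed.

Lemma Cmul_conj_unit p w : Cnorm2 p = 1 -> Cmul (Cconj p) (Cmul p w) = w.
Proof.
  intros H. destruct p as [a b], w as [c d]. csimpl. f_equal.
  - replace (a * (a * c - b * d) - - b * (a * d + b * c)) with ((a * a + b * b) * c) by ring. rewrite H; ring.
  - replace (a * (a * d + b * c) + - b * (a * c - b * d)) with ((a * a + b * b) * d) by ring. rewrite H; ring.
Qed.

(** * Rooted trees and the vertex labelling by the model index set *)

Section Tree.
Variable V : Type.
Variable root : V.
Variable par : V -> option V.
Hypothesis Htree : is_rooted_tree root par.

Lemma par_root : par root = None.
Proof. apply Htree. Qed.

Lemma par_None v : par v = None -> v = root.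
Proof. apply Htree. Qed.

Lemma gen_0 w : gen root par 0 w <-> w = root.
Proof. unfold gen; simpl; split; intros H; [inversion H|subst]; auto. Qed.

Lemma gen_S n w : gen root par (S n) w <-> exists y, par w = Some y /\ gen root par n y.
Proof.
  assert (Hnone : forall k, Nat.iter k (parO par) None = None)
    by (induction k as [|k IH]; simpl; rewrite ?IH; auto).
  unfold gen. rewrite Nat.iter_succ_r. simpl. split.
  - destruct (par w) as [y|]; [intros; exists y; auto|]. rewrite Hnone; discriminate.
  - intros [y [-> H]]; auto.
Qed.

Lemma gen_unique n m v : gen root par n v -> gen root par m v -> n = m.
Proof.
  revert m v. induction n as [|n IH]; intros m v H1 H2; destruct m as [|m]; auto.
  - apply gen_0 in H1; subst. apply gen_S in H2. destruct H2 as [y [E _]]. rewrite par_root in E; discriminate.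
  - apply gen_0 in H2; subst. apply gen_S in H1. destruct H1 as [y [E _]]. rewrite par_root in E; discriminate.
  - apply gen_S in H1. apply gen_S in H2. destruct H1 as [y [E H1]], H2 as [y' [E' H2]].
    rewrite E in E'. inversion E'; subst. f_equal. eauto.
Qed.

Definition depth (v : V) : nat := epsilon (inhabits 0%nat) (fun n => gen root par n v).

Lemma depth_spec v : gen root par (depth v) v.
Proof. unfold depth. apply epsilon_spec, Htree. Qed.

Lemma depth_eq n v : gen root par n v -> depth v = n.
Proof. intros H. eapply gen_unique; [apply depth_spec|exact H]. Qed.

Lemma depth_child w y : par w = Some y -> depth w = S (depth y).
Proof. intros E. apply depth_eq, gen_S. exists y; split; auto. apply depth_spec. Qed.

Lemma depth_root : depth root = 0%nat.
Proof. apply depth_eq, gen_0; auto. Qed.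

Lemma depth_eq0 v : depth v = 0%nat -> v = root.
Proof. intros H. apply gen_0. rewrite <- H. apply depth_spec. Qed.

Lemma depth_S v n : depth v = S n -> exists y, par v = Some y /\ depth y = n.
Proof.
  intros H. pose proof (depth_spec v) as G. rewrite H in G. apply gen_S in G.
  destruct G as [y [E G]]. exists y; split; auto. apply depth_eq; auto.
Qed.

Definition parent (w : V) : V := match par w with Some y => y | None => root end.

Lemma parent_eq w y : par w = Some y -> parent w = y.
Proof. intros E; unfold parent; rewrite E; auto. Qed.

Lemma depth_parent w m : depth w = S m -> depth (parent w) = m.
Proof. intros H. destruct (depth_S w m H) as [y [E Hy]]. rewrite (parent_eq w y E); auto. Qed.

Section ChildChoice.
Variable c : V -> V.
Hypothesis c_par : forall u, par (c u) = Some u.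

Definition chosen (w : V) : Prop := match par w with Some y => w = c y | None => False end.

Lemma c_inj a b : c a = c b -> a = b.
Proof. intros E. pose proof (c_par a) as H. rewrite E, c_par in H. inversion H; auto. Qed.

Lemma depth_c u : depth (c u) = S (depth u).
Proof. apply depth_child, c_par. Qed.

Lemma depth_iter n v : depth (Nat.iter n c v) = (n + depth v)%nat.
Proof. induction n as [|n IH]; simpl; rewrite ?depth_c, ?IH; auto. Qed.

Lemma depth_inhabited k : exists u, depth u = k.
Proof.
  induction k as [|k [u Hu]]; [exists root; apply depth_root|].
  exists (c u). rewrite depth_c; auto.
Qed.

Lemma chosen_c y : chosen (c y).
Proof. unfold chosen; rewrite c_par; auto. Qed.

Lemma parent_c y : parent (c y) = y.
Proof. apply parent_eq, c_par. Qed.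

Lemma chosen_inv w : chosen w -> w = c (parent w).
Proof. unfold chosen, parent. destruct (par w); tauto. Qed.

Lemma root_not_chosen : ~ chosen root.
Proof. unfold chosen; rewrite par_root; auto. Qed.

(* The index set [Idx (Jmult root par c)] of the model operator labels the vertices:
   [inl n] is the n-th vertex of the chain of chosen children starting at the root, and
   [inr (kk, (u, v), n)] is the n-th vertex of the chain starting at an unchosen child [v] of [u]. *)
Definition vertex_of (i : Idx (Jmult root par c)) : V :=
  match i with
  | inl n => Nat.iter n c root
  | inr (existT _ kk (j, n)) => Nat.iter n c (snd (proj1_sig j))
  end.

Definition next_index (i : Idx (Jmult root par c)) : Idx (Jmult root par c) :=
  match i with
  | inl n => inl (S n)
  | inr (existT _ kk (j, n)) => inr (existT _ kk (j, S n))
  end.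

Lemma vertex_of_next i : vertex_of (next_index i) = c (vertex_of i).
Proof. destruct i as [n|[kk [j n]]]; reflexivity. Qed.

Lemma Jmult_not_chosen kk (j : Jmult root par c kk) : ~ chosen (snd (proj1_sig j)).
Proof. destruct j as [[u v] [H1 [H2 H3]]]; simpl in *. unfold chosen. rewrite H2. auto. Qed.

Lemma Jmult_eq kk (j j' : Jmult root par c kk) : proj1_sig j = proj1_sig j' -> j = j'.
Proof. destruct j, j'; simpl; intros; subst; f_equal; apply proof_irrelevance. Qed.

Lemma iter_c_inj n m a b :
  ~ chosen a -> ~ chosen b -> Nat.iter n c a = Nat.iter m c b -> n = m /\ a = b.
Proof.
  revert m. induction n as [|n IH]; intros m Ha Hb E; destruct m as [|m]; simpl in E; auto.
  - exfalso; apply Ha; rewrite E; apply chosen_c.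
  - exfalso; apply Hb; rewrite <- E; apply chosen_c.
  - apply c_inj in E. destruct (IH m Ha Hb E); auto.
Qed.

Lemma vertex_of_inj i i' : vertex_of i = vertex_of i' -> i = i'.
Proof.
  destruct i as [n|[kk [j n]]], i' as [n'|[kk' [j' n']]]; simpl; intros E.
  - apply iter_c_inj in E; try apply root_not_chosen. destruct E; subst; auto.
  - apply iter_c_inj in E; try apply root_not_chosen; try apply Jmult_not_chosen. destruct E as [_ E].
    exfalso. destruct j' as [[u v] [H1 [H2 H3]]]; simpl in *. subst v. rewrite par_root in H2; discriminate.
  - apply iter_c_inj in E; try apply root_not_chosen; try apply Jmult_not_chosen. destruct E as [_ E].
    exfalso. destruct j as [[u v] [H1 [H2 H3]]]; simpl in *. subst v. rewrite par_root in H2; discriminate.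
  - apply iter_c_inj in E; try apply Jmult_not_chosen. destruct E as [-> E].
    assert (F : fst (proj1_sig j) = fst (proj1_sig j')).
    { destruct j as [[u v] [H1 [H2 H3]]], j' as [[u' v'] [H1' [H2' H3']]]; simpl in *.
      subst v'. rewrite H2 in H2'. inversion H2'; auto. }
    assert (kk = kk').
    { destruct j as [[u v] [H1 [H2 H3]]], j' as [[u' v'] [H1' [H2' H3']]]; simpl in *.
      subst u'. eapply gen_unique; eauto. }
    subst kk'. rewrite (Jmult_eq kk j j'); auto.
    destruct (proj1_sig j), (proj1_sig j'); simpl in *; subst; auto.
Qed.

Lemma vertex_of_surj w : exists i, vertex_of i = w.
Proof.
  remember (depth w) as n eqn:En. revert w En. induction n as [|n IH]; intros w En.
  - exists (inl 0%nat). simpl. symmetry; apply depth_eq0; auto.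
  - destruct (depth_S w n (eq_sym En)) as [u [E Hu]].
    destruct (classic (w = c u)) as [C|C].
    + destruct (IH u (eq_sym Hu)) as [i Hi]. exists (next_index i). rewrite vertex_of_next, Hi; auto.
    + assert (P : gen root par n (fst (u, w)) /\ par (snd (u, w)) = Some (fst (u, w))
                  /\ snd (u, w) <> c (fst (u, w))).
      { simpl. split; [|split]; auto. rewrite <- Hu. apply depth_spec. }
      exists (inr (existT _ n (exist _ (u, w) P, 0%nat))). reflexivity.
Qed.

Lemma nsq_vertex_of (g : V -> Cx) A : nsq g A <-> nsq (fun i => g (vertex_of i)) A.
Proof.
  apply (has_sum_reindex (fun w => Cnorm2 (g w)) (fun i => Cnorm2 (g (vertex_of i))) vertex_of); auto.
  - intros; apply vertex_of_inj; auto.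
  - intros w Hw. destruct (vertex_of_surj w) as [i Hi]. exists i; split; [rewrite Hi|]; auto.
Qed.

Definition index_of (w : V) : Idx (Jmult root par c) :=
  epsilon (inhabits (inl 0%nat)) (fun i => vertex_of i = w).

Lemma vertex_of_index_of w : vertex_of (index_of w) = w.
Proof. unfold index_of. apply epsilon_spec, vertex_of_surj. Qed.

Lemma index_of_vertex_of i : index_of (vertex_of i) = i.
Proof. apply vertex_of_inj, vertex_of_index_of. Qed.

Lemma Jmult_countable :
  (forall u, exists h : V -> nat, forall v v', par v = Some u -> par v' = Some u -> h v = h v' -> v = v') ->
  forall kk, exists h : Jmult root par c kk -> nat, forall a b, h a = h b -> a = b.
Proof.
  intros Hch kk. destruct (choice _ Hch) as [hc Hhc].
  assert (Hdepth : forall k, exists g : V -> nat, forall u v, depth u = k -> depth v = k -> g u = g v -> u = v).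
  { induction k as [|k [g Hg]].
    - exists (fun _ => 0%nat). intros u v Hu Hv _. rewrite (depth_eq0 u Hu), (depth_eq0 v Hv); auto.
    - exists (fun w => Cantor.to_nat (g (parent w), hc (parent w) w)).
      intros u v Hu Hv E. apply Cantor.to_nat_inj in E. inversion E as [[E1 E2]].
      destruct (depth_S u k Hu) as [pu [Pu Lu]], (depth_S v k Hv) as [pv [Pv Lv]].
      rewrite (parent_eq u pu Pu), (parent_eq v pv Pv) in *.
      assert (pu = pv) by (apply Hg; auto). subst pv. apply (Hhc pu); auto. }
  destruct (Hdepth kk) as [g Hg].
  exists (fun j => Cantor.to_nat (g (fst (proj1_sig j)), hc (fst (proj1_sig j)) (snd (proj1_sig j)))).
  intros a b E. apply Cantor.to_nat_inj in E. inversion E as [[E1 E2]]. apply Jmult_eq.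
  destruct a as [[u v] [H1 [H2 H3]]], b as [[u' v'] [H1' [H2' H3']]]; simpl in *.
  assert (u = u') by (apply Hg; auto; apply depth_eq; auto). subst u'.
  f_equal. apply (Hhc u); auto.
Qed.

(** * Column norms of a 2-isometric weighted shift *)

Section Shift.
Variable lam : V -> Cx.
Variable alpha : V -> R.
Variable x : R.
Hypothesis H2i : two_isometry (wshift par lam).
Hypothesis Hal : forall u p, par u = Some p -> nsq (wshift par lam (e_ u)) (alpha p ^ 2).
Hypothesis Hx0 : 0 <= x.
Hypothesis Hx : nsq (wshift par lam (e_ root)) (x ^ 2).

Definition shift_col (u w : V) : Cx := if classic_eq_dec (par w) (Some u) then lam w else C0.

Lemma shift_col_child u w : par w = Some u -> shift_col u w = lam w.
Proof. intros E; unfold shift_col; destruct classic_eq_dec; congruence. Qed.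

Lemma shift_col_nchild u w : par w <> Some u -> shift_col u w = C0.
Proof. intros E; unfold shift_col; destruct classic_eq_dec; congruence. Qed.

Lemma wshift_e_eq u w : wshift par lam (e_ u) w = shift_col u w.
Proof.
  unfold wshift, shift_col, e_. destruct (par w) as [p|]; destruct classic_eq_dec as [E|E];
    try congruence; destruct excluded_middle_informative; try congruence;
    destruct (lam w); csimpl; f_equal; ring.
Qed.

(* [col_norm2 u = ||S e_u||^2] *)
Definition col_norm2 (u : V) : R := match par u with Some p => alpha p ^ 2 | None => x ^ 2 end.

Lemma nsq_shift_col u : nsq (shift_col u) (col_norm2 u).
Proof.
  unfold col_norm2. destruct (par u) eqn:E.
  - apply nsq_ext with (wshift par lam (e_ u)); [apply wshift_e_eq|apply Hal; auto].
  - rewrite (par_None u E). apply nsq_ext with (wshift par lam (e_ root)); [apply wshift_e_eq|auto].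
Qed.

Lemma l2_shift_col y : l2 (shift_col y).
Proof. exists (col_norm2 y); apply nsq_shift_col. Qed.

Lemma col_norm2_child u y : par y = Some u -> col_norm2 y = alpha u ^ 2.
Proof. intros E; unfold col_norm2; rewrite E; auto. Qed.

(* [S^2 e_u = sum over children y of u of lam_y S e_y], with disjointly supported summands of norm [alpha u]. *)
Lemma nsq_shift_shift_e u : nsq (wshift par lam (wshift par lam (e_ u))) (alpha u ^ 2 * col_norm2 u).
Proof.
  set (g := fun w => Cnorm2 (wshift par lam (wshift par lam (e_ u)) w)).
  set (s := fun k : option V => match k with Some y => Cnorm2 (shift_col u y) * col_norm2 y | None => 0 end).
  apply (has_sum_by_fibers par g s); [intros; apply Cnorm2_nonneg| |].
  - intros [y|]; simpl.
    + apply has_sum_ext with (fun w => Cnorm2 (shift_col u y) * Cnorm2 (shift_col y w));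
        [|apply has_sum_scal; [apply Cnorm2_nonneg|apply nsq_shift_col]].
      intros w. unfold fiber, g. destruct classic_eq_dec as [E|E].
      * unfold wshift at 1. rewrite E, wshift_e_eq, Cnorm2_mul, (shift_col_child y w E). ring.
      * rewrite (shift_col_nchild y w E), Cnorm2_C0; ring.
    + apply has_sum_0. intros w. unfold fiber, g, wshift. destruct classic_eq_dec as [E|E]; auto.
      rewrite E. apply Cnorm2_C0.
  - assert (Hs : forall y, s (Some y) = alpha u ^ 2 * Cnorm2 (shift_col u y)).
    { intros y; simpl. destruct (classic (par y = Some u)) as [E|E].
      - rewrite (col_norm2_child u y E). ring.
      - rewrite shift_col_nchild, Cnorm2_C0 by auto. ring. }
    apply (has_sum_reindex s (fun y => alpha u ^ 2 * Cnorm2 (shift_col u y)) Some).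
    + intros j _. apply Hs.
    + intros j j' _ _ E; inversion E; auto.
    + intros [i|] Hi; [|simpl in Hi; lra]. exists i; split; auto. rewrite <- Hs. auto.
    + apply has_sum_scal; [apply pow2_ge_0|apply nsq_shift_col].
Qed.

Lemma two_isometry_col u : 1 - 2 * col_norm2 u + alpha u ^ 2 * col_norm2 u = 0.
Proof.
  apply (H2i (e_ u)); [apply l2_e|apply nsq_e| |apply nsq_shift_shift_e].
  apply nsq_ext with (shift_col u); [intros; rewrite wshift_e_eq; auto|apply nsq_shift_col].
Qed.

Lemma col_norm2_pos u : 0 < col_norm2 u.
Proof.
  pose proof (two_isometry_col u). pose proof (nsq_nonneg _ _ (nsq_shift_col u)).
  destruct (Req_dec (col_norm2 u) 0) as [E|E]; [rewrite E in *; lra|lra].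
Qed.

Lemma alpha_sq u : alpha u ^ 2 = 2 - / col_norm2 u.
Proof.
  pose proof (two_isometry_col u). pose proof (col_norm2_pos u).
  apply (Rmult_eq_reg_r (col_norm2 u)); [|lra]. field_simplify; lra.
Qed.

Lemma exists_nonzero_child u : exists w, par w = Some u /\ lam w <> C0.
Proof.
  apply NNPP; intro Hn. enough (col_norm2 u = 0) by (pose proof (col_norm2_pos u); lra).
  apply (nsq_unique (shift_col u)); [apply nsq_shift_col|]. apply nsq_0. intros w.
  destruct (classic (par w = Some u)) as [E|E]; [|apply shift_col_nchild; auto].
  rewrite shift_col_child by auto. apply NNPP. intros Hw. apply Hn. exists w; auto.
Qed.

Lemma children_countable : (forall v, v <> root -> lam v <> C0) ->
  forall u, exists h : V -> nat, forall v v', par v = Some u -> par v' = Some u -> h v = h v' -> v = v'.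
Proof.
  intros Hnz u. destruct (has_sum_countable_support _ _ (nsq_shift_col u)) as [phi Hphi].
  assert (Hpos : forall v, par v = Some u -> 0 < Cnorm2 (shift_col u v)).
  { intros v E. rewrite shift_col_child by auto. destruct (Cnorm2_nonneg (lam v)) as [H|H]; auto.
    exfalso. apply (Hnz v); [intros ->; rewrite par_root in E; discriminate|apply Cnorm2_eq0; auto]. }
  exists phi. intros v v' E E' Hv. apply Hphi; auto.
Qed.

(* The solution of [t_(k+1) = 2 - 1/t_k], [t_0 = x^2] (see [alpha_sq]); it is [xi k x ^ 2]. *)
Definition gen_norm2 (k : nat) : R := (1 + (INR k + 1) * (x ^ 2 - 1)) / (1 + INR k * (x ^ 2 - 1)).

Lemma col_norm2_gen k : 0 < 1 + INR k * (x ^ 2 - 1) /\ forall u, depth u = k -> col_norm2 u = gen_norm2 k.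
Proof.
  induction k as [|k [Hp Hk]].
  - split; [simpl; lra|]. intros u Hu. rewrite (depth_eq0 u Hu).
    unfold col_norm2, gen_norm2. rewrite par_root. simpl. field.
  - destruct (depth_inhabited k) as [u Hu].
    pose proof (col_norm2_pos u) as Hpos. rewrite (Hk u Hu) in Hpos. unfold gen_norm2 in Hpos.
    assert (Hp' : 0 < 1 + INR (S k) * (x ^ 2 - 1)).
    { rewrite S_INR. apply (Rmult_lt_reg_r (/ (1 + INR k * (x ^ 2 - 1)))); [apply Rinv_0_lt_compat; lra|].
      rewrite Rmult_0_l. exact Hpos. }
    split; auto. intros w Hw. destruct (depth_S w k Hw) as [y [Ey Hy]].
    rewrite (col_norm2_child y w Ey), alpha_sq, (Hk y Hy). unfold gen_norm2. rewrite S_INR in *.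
    field. split; lra.
Qed.

Lemma x_ge1 : 1 <= x.
Proof.
  enough (0 <= x ^ 2 - 1) by nra.
  (* otherwise the denominator [1 + n (x^2 - 1)] of [gen_norm2 n] turns negative for large [n] *)
  apply Rnot_lt_le; intro H. destruct (INR_unbounded (- / (x ^ 2 - 1))) as [n Hn].
  destruct (col_norm2_gen n) as [Hp _]. enough (INR n * (x ^ 2 - 1) < -1) by lra.
  apply Rgt_lt, (Rmult_lt_compat_r (- (x ^ 2 - 1))) in Hn; [|lra].
  replace (- / (x ^ 2 - 1) * - (x ^ 2 - 1)) with 1 in Hn by (field; lra). lra.
Qed.

Definition beta (k : nat) : R := xi k x.

Lemma beta_pos k : 0 < beta k.
Proof. pose proof (xi_ge1 k x x_ge1). unfold beta; lra. Qed.

Lemma col_norm2_beta u : col_norm2 u = beta (depth u) * beta (depth u).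
Proof.
  destruct (col_norm2_gen (depth u)) as [_ ->]; auto.
  unfold beta, gen_norm2. rewrite <- (xi_sq _ _ x_ge1). ring.
Qed.

(** * Straightening the shift by generationwise reflections *)

Hypothesis c_nonzero : forall u, lam (c u) <> C0.

Definition restrict (P : V -> Prop) (h : V -> Cx) : V -> Cx :=
  fun w => if excluded_middle_informative (P w) then h w else C0.

Local Notation children_of y := (fun w : V => par w = Some y).

Definition restrict_depth (m : nat) := restrict (fun w => depth w = m).

Lemma nsq_restrict_sub (P Q : V -> Prop) h A :
  (forall w, Q w -> P w) -> nsq (restrict P h) A -> exists a, nsq (restrict Q h) a.
Proof.
  intros HQ HA.
  assert (Hle : forall w, Cnorm2 (restrict Q h w) <= Cnorm2 (restrict P h w)).
  { intros w. unfold restrict.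
    destruct excluded_middle_informative as [Hq|]; destruct excluded_middle_informative;
      try (exfalso; auto; fail); rewrite ?Cnorm2_C0; auto using Cnorm2_nonneg; lra. }
  destruct (has_sum_le_exists _ _ A Hle HA) as [a [Ha _]]. exists a; exact Ha.
Qed.

Lemma l2_restrict_sub (P Q : V -> Prop) h : (forall w, Q w -> P w) -> l2 (restrict P h) -> l2 (restrict Q h).
Proof. intros H [A HA]. destruct (nsq_restrict_sub P Q h A H HA) as [a Ha]; exists a; auto. Qed.

Lemma l2_restrict_depth m f : l2 f -> l2 (restrict_depth m f).
Proof.
  intros [A HA]. apply (l2_dom _ (fun w => Cnorm2 (f w)) A); auto. intros w; unfold restrict_depth, restrict.
  destruct excluded_middle_informative; [lra|rewrite Cnorm2_C0; apply Cnorm2_nonneg].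
Qed.

Lemma l2_restrict_children m y f :
  depth y = m -> l2 (restrict_depth (S m) f) -> l2 (restrict (children_of y) f).
Proof. intros Hy. apply l2_restrict_sub. intros w E. rewrite (depth_child w y E); auto. Qed.

Lemma fiber_restrict {K : Type} (p : V -> K) (P : V -> Prop) h k w :
  fiber p (fun w => Cnorm2 (restrict P h w)) k w = Cnorm2 (restrict (fun w => P w /\ p w = k) h w).
Proof.
  unfold fiber, restrict. destruct classic_eq_dec; repeat destruct excluded_middle_informative;
    try tauto; rewrite ?Cnorm2_C0; auto.
Qed.

Definition wmod (y : V) : R := cmod (lam (c y)).
Definition wphase (y : V) : Cx := cphase (lam (c y)).

Lemma Cnorm2_wphase y : Cnorm2 (wphase y) = 1.
Proof. apply Cnorm2_cphase, c_nonzero. Qed.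

Lemma lam_c_polar y : lam (c y) = Cmul (RtoC (wmod y)) (wphase y).
Proof. apply polar_decomposition, c_nonzero. Qed.

Lemma Cnorm2_wphase_mul y z : Cnorm2 (Cmul (wphase y) z) = Cnorm2 z.
Proof. rewrite Cnorm2_mul, Cnorm2_wphase; ring. Qed.

Lemma Cnorm2_conj_wphase_mul y z : Cnorm2 (Cmul (Cconj (wphase y)) z) = Cnorm2 z.
Proof. rewrite Cnorm2_mul, Cnorm2_conj, Cnorm2_wphase; ring. Qed.

(* The reflection in [rvec y] swaps [e_(c y)] with the unit vector [S e_y / (beta (depth y) * wphase y)],
   so it maps [S e_y] to [beta (depth y) * wphase y * e_(c y)]; it acts on the children of [y] only. *)
Definition rvec_coef (y : V) : Cx := Cmul (RtoC (/ beta (depth y))) (Cconj (wphase y)).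
Definition rvec (y : V) : V -> Cx := fun w => Csub (e_ (c y) w) (Cmul (rvec_coef y) (shift_col y w)).
Definition rnorm2 (y : V) : R := 2 - 2 * wmod y / beta (depth y).

Lemma rvec_nchild y w : par w <> Some y -> rvec y w = C0.
Proof.
  intros E. unfold rvec. rewrite shift_col_nchild, e_neq; auto; [csimpl; f_equal; ring|].
  intros ->. apply E, c_par.
Qed.

Lemma inner_e_shift_col y : inner (e_ (c y)) (shift_col y) = Cconj (lam (c y)).
Proof.
  apply inner_eq; [apply l2_e|apply l2_shift_col|].
  replace (Cconj (lam (c y))) with (inner_terms (e_ (c y)) (shift_col y) (c y)).
  - apply has_csum_single. intros i Hi. unfold inner_terms. rewrite e_neq; auto. csimpl; f_equal; ring.
  - unfold inner_terms. rewrite e_eq, shift_col_child by apply c_par.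
    destruct (lam (c y)); csimpl; f_equal; ring.
Qed.

Lemma nsq_rvec y : nsq (rvec y) (rnorm2 y).
Proof.
  pose proof (beta_pos (depth y)) as Hb. pose proof (Cnorm2_wphase y) as Hph.
  replace (rnorm2 y) with (1 - 2 * fst (Cmul (Cconj (rvec_coef y)) (inner (e_ (c y)) (shift_col y)))
                           + Cnorm2 (rvec_coef y) * col_norm2 y).
  - apply nsq_sub_scal; [apply nsq_e|apply nsq_shift_col].
  - rewrite inner_e_shift_col, lam_c_polar, col_norm2_beta. unfold rvec_coef, rnorm2.
    set (B := beta (depth y)) in *. assert (HB : / B * B = 1) by (field; lra).
    destruct (wphase y) as [a b]. csimpl.
    transitivity (1 - 2 * (/ B) * wmod y * (a * a + b * b) + (/ B * B) ^ 2 * (a * a + b * b)); [ring|].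
    rewrite Hph, HB. field; lra.
Qed.

Lemma l2_rvec y : l2 (rvec y).
Proof. exists (rnorm2 y); apply nsq_rvec. Qed.

Definition reflect (h : V -> Cx) : V -> Cx :=
  fun w => match par w with Some y => householder (rnorm2 y) (rvec y) h w | None => h w end.

Lemma inner_restrict_children y h : inner (restrict (children_of y) h) (rvec y) = inner h (rvec y).
Proof.
  unfold inner. replace (inner_terms (restrict (children_of y) h) (rvec y)) with (inner_terms h (rvec y));
    [reflexivity|].
  apply functional_extensionality. intros w. unfold inner_terms, restrict.
  destruct excluded_middle_informative; auto.
  rewrite rvec_nchild; auto. csimpl; f_equal; ring.
Qed.

Lemma reflect_local h w y :
  par w = Some y -> reflect h w = householder (rnorm2 y) (rvec y) (restrict (children_of y) h) w.
Proof.
  intros E. unfold reflect. rewrite E. unfold householder, householder_coef.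
  rewrite inner_restrict_children. unfold restrict. destruct excluded_middle_informative; congruence.
Qed.

Lemma restrict_reflect y h w :
  restrict (children_of y) (reflect h) w = householder (rnorm2 y) (rvec y) (restrict (children_of y) h) w.
Proof.
  unfold restrict at 1. destruct excluded_middle_informative as [E|E]; [apply reflect_local; auto|].
  unfold householder. rewrite rvec_nchild by auto. unfold restrict.
  destruct excluded_middle_informative; [congruence|]. csimpl; f_equal; ring.
Qed.

Lemma reflect_depth_local m h h' :
  (forall w, depth w = S m -> h w = h' w) -> forall w, depth w = S m -> reflect h w = reflect h' w.
Proof.
  intros H w Hw. destruct (depth_S w m Hw) as [y [E Hy]]. rewrite !(reflect_local _ w y E).
  replace (restrict (children_of y) h) with (restrict (children_of y) h'); auto.
  apply functional_extensionality; intros w'. unfold restrict.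
  destruct excluded_middle_informative as [E'|]; auto.
  symmetry; apply H. rewrite (depth_child w' y E'); auto.
Qed.

Lemma reflect_involutive m P :
  l2 (restrict_depth (S m) P) -> forall w, depth w = S m -> reflect (reflect P) w = P w.
Proof.
  intros HP w Hw. destruct (depth_S w m Hw) as [y [E Hy]]. rewrite (reflect_local _ w y E).
  replace (restrict (children_of y) (reflect P))
    with (householder (rnorm2 y) (rvec y) (restrict (children_of y) P))
    by (apply functional_extensionality; intros; rewrite restrict_reflect; auto).
  rewrite householder_involutive; [|apply nsq_rvec|apply (l2_restrict_children m); auto].
  unfold restrict; destruct excluded_middle_informative; congruence.
Qed.

Lemma reflect_add m f g : l2 (restrict_depth (S m) f) -> l2 (restrict_depth (S m) g) ->
  forall w, depth w = S m -> reflect (fun v => Cadd (f v) (g v)) w = Cadd (reflect f w) (reflect g w).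
Proof.
  intros Hf Hg w Hw. destruct (depth_S w m Hw) as [y [E Hy]]. rewrite !(reflect_local _ w y E).
  replace (restrict (children_of y) (fun v => Cadd (f v) (g v))) with
    (fun v => Cadd (restrict (children_of y) f v) (restrict (children_of y) g v)).
  - apply householder_add; [apply l2_rvec|apply (l2_restrict_children m); auto..].
  - apply functional_extensionality; intros v. unfold restrict.
    destruct excluded_middle_informative; auto. csimpl; f_equal; ring.
Qed.

Lemma reflect_scal m f z : l2 (restrict_depth (S m) f) ->
  forall w, depth w = S m -> reflect (fun v => Cmul z (f v)) w = Cmul z (reflect f w).
Proof.
  intros Hf w Hw. destruct (depth_S w m Hw) as [y [E Hy]]. rewrite !(reflect_local _ w y E).
  replace (restrict (children_of y) (fun v => Cmul z (f v)))
    with (fun v => Cmul z (restrict (children_of y) f v)).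
  - apply householder_scal; [apply l2_rvec|apply (l2_restrict_children m); auto].
  - apply functional_extensionality; intros v. unfold restrict.
    destruct excluded_middle_informative; auto. destruct z; csimpl; f_equal; ring.
Qed.

Lemma nsq_reflect m h A : nsq (restrict_depth (S m) h) A -> nsq (restrict_depth (S m) (reflect h)) A.
Proof.
  apply (has_sum_fiberwise par); try (intros; apply Cnorm2_nonneg).
  intros k a Ha. unfold restrict_depth in *.
  apply has_sum_ext with (fun w => Cnorm2 (restrict (fun w => depth w = S m /\ par w = k) (reflect h) w));
    [intros; rewrite fiber_restrict; auto|].
  apply has_sum_ext with (h := fun w => Cnorm2 (restrict (fun w => depth w = S m /\ par w = k) h w)) in Ha;
    [|intros; rewrite fiber_restrict; auto].
  destruct k as [y|]; [destruct (classic (depth y = m)) as [Ey|Ey]|].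
  - assert (E1 : forall f w,
      restrict (fun w => depth w = S m /\ par w = Some y) f w = restrict (children_of y) f w).
    { intros f w. unfold restrict.
      destruct (excluded_middle_informative (depth w = S m /\ par w = Some y)) as [Hd|Hd],
        (excluded_middle_informative (par w = Some y)) as [Hc|Hc]; try tauto.
      exfalso; apply Hd; split; auto. rewrite (depth_child w y Hc); auto. }
    apply has_sum_ext with (fun w => Cnorm2 (householder (rnorm2 y) (rvec y) (restrict (children_of y) h) w));
      [intros w; rewrite E1, restrict_reflect; auto|].
    apply nsq_householder; [apply nsq_rvec|]. eapply has_sum_ext; [|exact Ha]. intros; simpl; rewrite E1; auto.
  - (* the fibers over [Some y] with [depth y <> m], and over [None], carry no mass at depth [S m] *)
    assert (E1 : forall f w, restrict (fun w => depth w = S m /\ par w = Some y) f w = C0).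
    { intros f w. unfold restrict. destruct excluded_middle_informative as [[A1 A2]|]; auto.
      exfalso. apply Ey. rewrite (depth_child w y A2) in A1. lia. }
    replace a with 0 by (apply (nsq_unique _ _ _ (nsq_0 _ (E1 h)) Ha)). apply nsq_0; auto.
  - assert (E1 : forall f w, restrict (fun w => depth w = S m /\ par w = None) f w = C0).
    { intros f w. unfold restrict. destruct excluded_middle_informative as [[A1 A2]|]; auto.
      rewrite (par_None w A2), depth_root in A1. discriminate. }
    replace a with 0 by (apply (nsq_unique _ _ _ (nsq_0 _ (E1 h)) Ha)). apply nsq_0; auto.
Qed.

Lemma rvec_coef_neq0 y : rvec_coef y <> C0.
Proof.
  intro H. assert (E : Cnorm2 (rvec_coef y) = 0) by (rewrite H; apply Cnorm2_C0). unfold rvec_coef in E.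
  rewrite Cnorm2_mul, Cnorm2_conj, Cnorm2_wphase in E. pose proof (beta_pos (depth y)).
  assert (/ beta (depth y) <> 0) by (apply Rinv_neq_0_compat; lra). csimpl. nra.
Qed.

Lemma inner_shift_col_rvec y : inner (shift_col y) (rvec y) = Cmul (RtoC (wmod y - beta (depth y))) (wphase y).
Proof.
  pose proof (beta_pos (depth y)) as Hb.
  apply inner_eq; [apply l2_shift_col|apply l2_rvec|].
  apply has_csum_ext with (fun w => Cadd (inner_terms (shift_col y) (e_ (c y)) w)
                                      (Cmul (Copp (Cconj (rvec_coef y))) (RtoC (Cnorm2 (shift_col y w))))).
  { intros w. unfold inner_terms, rvec.
    destruct (shift_col y w), (e_ (c y) w), (rvec_coef y). csimpl. f_equal; ring. }
  replace (Cmul (RtoC (wmod y - beta (depth y))) (wphase y)) with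
    (Cadd (inner_terms (shift_col y) (e_ (c y)) (c y))
          (Cmul (Copp (Cconj (rvec_coef y))) (RtoC (col_norm2 y)))).
  - apply has_csum_add; [apply has_csum_single|apply has_csum_scal, has_csum_real;
      [intros; apply Cnorm2_nonneg|apply nsq_shift_col]].
    intros i Hi. unfold inner_terms. rewrite e_neq; auto. destruct (shift_col y i); csimpl; f_equal; ring.
  - unfold inner_terms. rewrite e_eq, shift_col_child, lam_c_polar, col_norm2_beta by apply c_par.
    unfold rvec_coef. destruct (wphase y) as [a b]. csimpl. f_equal; field; lra.
Qed.

Lemma shift_col_aligned y : rnorm2 y = 0 ->
  forall w, shift_col y w = if classic_eq_dec w (c y) then Cmul (RtoC (beta (depth y))) (wphase y) else C0.
Proof.
  intros E w. pose proof (beta_pos (depth y)) as Hb. pose proof (Cnorm2_wphase y) as Hph.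
  pose proof (nsq_eq0 (rvec y) ltac:(rewrite <- E; apply nsq_rvec)) as Z.
  destruct classic_eq_dec as [->|ne].
  - rewrite shift_col_child, lam_c_polar by apply c_par.
    replace (wmod y) with (beta (depth y)); [reflexivity|].
    unfold rnorm2 in E. apply (Rmult_eq_reg_r (/ beta (depth y))); [|apply Rinv_neq_0_compat; lra].
    field_simplify; lra.
  - specialize (Z w). unfold rvec in Z. rewrite e_neq in Z; auto.
    apply (Cmul_eq0 (rvec_coef y)); [|apply rvec_coef_neq0].
    destruct (Cmul (rvec_coef y) (shift_col y w)); csimpl; inversion Z; f_equal; lra.
Qed.

Lemma householder_shift_col y w : householder (rnorm2 y) (rvec y) (shift_col y) w =
  if classic_eq_dec w (c y) then Cmul (RtoC (beta (depth y))) (wphase y) else C0.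
Proof.
  pose proof (beta_pos (depth y)) as Hb. pose proof (Cnorm2_wphase y) as Hph.
  unfold householder, householder_coef. destruct (Req_EM_T (rnorm2 y) 0) as [E|E].
  - rewrite (shift_col_aligned y E w). destruct classic_eq_dec; csimpl; f_equal; ring.
  - rewrite inner_shift_col_rvec. unfold rvec, rvec_coef.
    assert (Hne : beta (depth y) - wmod y <> 0)
      by (intro; apply E; unfold rnorm2; replace (wmod y) with (beta (depth y)) by lra; field; lra).
    replace (Cmul (RtoC (2 / rnorm2 y)) (Cmul (RtoC (wmod y - beta (depth y))) (wphase y)))
      with (Cmul (RtoC (- beta (depth y))) (wphase y))
      by (unfold rnorm2; destruct (wphase y); csimpl; f_equal; field; split; lra).
    assert (Halg : forall (l e p : Cx) b, b <> 0 -> Cnorm2 p = 1 ->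
      Csub l (Cmul (Cmul (RtoC (- b)) p) (Csub e (Cmul (Cmul (RtoC (/ b)) (Cconj p)) l)))
      = Cmul (RtoC b) (Cmul p e)).
    { intros [l1 l2] [e1 e2] [p1 p2] b Hb0 Hp. csimpl.
      assert (H1 : l1 * b * p1 ^ 2 + l1 * b * p2 ^ 2 = l1 * b)
        by (replace (l1 * b * p1 ^ 2 + l1 * b * p2 ^ 2) with (l1 * b * (p1 * p1 + p2 * p2)) by ring;
            rewrite Hp; ring).
      assert (H2 : l2 * b * p1 ^ 2 + l2 * b * p2 ^ 2 = l2 * b)
        by (replace (l2 * b * p1 ^ 2 + l2 * b * p2 ^ 2) with (l2 * b * (p1 * p1 + p2 * p2)) by ring;
            rewrite Hp; ring).
      f_equal; field_simplify; auto; apply (Rmult_eq_reg_r b); auto; field_simplify; auto; lra. }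
    rewrite Halg by (auto; lra).
    destruct classic_eq_dec as [->|ne]; rewrite ?e_eq, ?e_neq by auto;
      destruct (wphase y); csimpl; f_equal; ring.
Qed.

Lemma nsq_chosen_reindex m (k k' : V -> Cx) a :
  (forall y, depth y = m -> Cnorm2 (k' (c y)) = Cnorm2 (k y)) ->
  (nsq (restrict_depth m k) a <-> nsq (restrict (fun w => depth w = S m /\ chosen w) k') a).
Proof.
  intros Hk. unfold nsq. symmetry.
  apply (has_sum_reindex (fun w => Cnorm2 (restrict (fun w => depth w = S m /\ chosen w) k' w))
           (fun y => Cnorm2 (restrict_depth m k y)) c).
  - intros j Hj. unfold restrict_depth, restrict in *.
    destruct (excluded_middle_informative (depth j = m)); [|rewrite Cnorm2_C0 in Hj; lra].
    destruct excluded_middle_informative as [_|n]; auto.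
    exfalso; apply n. split; [rewrite depth_c; auto|apply chosen_c].
  - intros j j' _ _ E; apply c_inj; auto.
  - intros i Hi. unfold restrict in Hi.
    destruct excluded_middle_informative as [[A1 A2]|]; [|rewrite Cnorm2_C0 in Hi; lra].
    exists (parent i). pose proof (chosen_inv i A2) as Ei. split; [|auto]. unfold restrict_depth, restrict.
    destruct excluded_middle_informative as [_|n]; [|exfalso; apply n; apply depth_parent; auto].
    rewrite <- Hk by (apply depth_parent; auto). rewrite <- Ei; auto.
Qed.

Definition chosenb (w : V) : bool := if excluded_middle_informative (chosen w) then true else false.

Lemma nsq_depth_split m (f f' : V -> Cx) A :
  (forall w, depth w = S m -> ~ chosen w -> f' w = f w) ->
  (forall a, nsq (restrict (fun w => depth w = S m /\ chosen w) f) a ->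
             nsq (restrict (fun w => depth w = S m /\ chosen w) f') a) ->
  nsq (restrict_depth (S m) f) A -> nsq (restrict_depth (S m) f') A.
Proof.
  intros Hn Hc. unfold restrict_depth. apply (has_sum_fiberwise chosenb); try (intros; apply Cnorm2_nonneg).
  assert (Hchosen : forall g w, fiber chosenb (fun w => Cnorm2 (restrict (fun w => depth w = S m) g w)) true w
                               = Cnorm2 (restrict (fun w => depth w = S m /\ chosen w) g w)).
  { intros g w. rewrite fiber_restrict. unfold restrict, chosenb.
    repeat destruct excluded_middle_informative; tauto || easy. }
  intros [|] a Ha.
  - eapply has_sum_ext; [intros; symmetry; apply Hchosen|].
    apply Hc. eapply has_sum_ext; [apply Hchosen|exact Ha].
  - eapply has_sum_ext; [|exact Ha]. intros w. rewrite !fiber_restrict. unfold restrict, chosenb.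
    destruct excluded_middle_informative as [[A1 A2]|]; auto.
    destruct (excluded_middle_informative (chosen w)) as [Hw|Hw]; [discriminate|]. rewrite Hn; auto.
Qed.

(* At depth [m + 1] a vector is first reflected.  Its values on chosen children are what the shift
   produces from depth [m] (see [reflect_shift]), so they are moved back to the parents and
   straightened at depth [m]; unchosen children start new chains and keep their values. *)
Definition pullback (h : V -> Cx) : V -> Cx := fun y => Cmul (Cconj (wphase y)) (reflect h (c y)).

Fixpoint straighten (m : nat) (h : V -> Cx) : V -> Cx :=
  match m with
  | O => h
  | S m' => fun w => if excluded_middle_informative (chosen w)
                     then straighten m' (pullback h) (parent w) else reflect h w
  end.

Definition graft (F : (V -> Cx) -> V -> Cx) (g : V -> Cx) : V -> Cx :=
  fun w => if excluded_middle_informative (chosen w)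
           then Cmul (wphase (parent w)) (F (fun y => g (c y)) (parent w)) else g w.

Fixpoint unstraighten (m : nat) (g : V -> Cx) : V -> Cx :=
  match m with
  | O => g
  | S m' => reflect (graft (unstraighten m') g)
  end.

Lemma straighten_local m : forall h h', (forall w, depth w = m -> h w = h' w) ->
  forall w, depth w = m -> straighten m h w = straighten m h' w.
Proof.
  induction m as [|m IH]; intros h h' H w Hw; simpl; auto.
  destruct excluded_middle_informative as [C|C].
  - apply IH; [|apply depth_parent; auto]. intros y Hy. unfold pullback. f_equal.
    apply (reflect_depth_local m); auto. rewrite depth_c; auto.
  - apply (reflect_depth_local m); auto.
Qed.

Lemma nsq_straighten m : forall h A, nsq (restrict_depth m h) A -> nsq (restrict_depth m (straighten m h)) A.
Proof.
  induction m as [|m IH]; intros h A HA; simpl; auto.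
  apply nsq_reflect in HA. apply nsq_depth_split with (reflect h); auto.
  - intros w _ C. destruct excluded_middle_informative; tauto.
  - intros a Ha. apply (nsq_chosen_reindex m (pullback h) (reflect h) a) in Ha;
      [|intros; unfold pullback; rewrite Cnorm2_conj_wphase_mul; auto].
    apply IH in Ha. apply (nsq_chosen_reindex m (straighten m (pullback h))); auto.
    intros y Hy. rewrite parent_c.
    destruct excluded_middle_informative as [_|n]; auto. exfalso; apply n, chosen_c.
Qed.

Lemma nsq_graft m F g A :
  (forall g A, nsq (restrict_depth m g) A -> nsq (restrict_depth m (F g)) A) ->
  nsq (restrict_depth (S m) g) A -> nsq (restrict_depth (S m) (graft F g)) A.
Proof.
  intros HF HA. apply nsq_depth_split with g; auto.
  - intros w _ C. unfold graft. destruct excluded_middle_informative; tauto.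
  - intros a Ha. apply (nsq_chosen_reindex m (fun y => g (c y)) g a) in Ha; auto.
    apply HF in Ha. apply (nsq_chosen_reindex m (F (fun y => g (c y)))); auto.
    intros y Hy. unfold graft. rewrite parent_c. destruct excluded_middle_informative as [_|n].
    + apply Cnorm2_wphase_mul.
    + exfalso; apply n, chosen_c.
Qed.

Lemma nsq_unstraighten m :
  forall g A, nsq (restrict_depth m g) A -> nsq (restrict_depth m (unstraighten m g)) A.
Proof. induction m as [|m IH]; intros g A HA; simpl; auto. apply nsq_reflect, nsq_graft; auto. Qed.

Lemma straighten_unstraighten m : forall g, l2 (restrict_depth m g) ->
  forall w, depth w = m -> straighten m (unstraighten m g) w = g w.
Proof.
  induction m as [|m IH]; intros g Hg w Hw; simpl; auto.
  assert (HP : l2 (restrict_depth (S m) (graft (unstraighten m) g)))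
    by (destruct Hg as [A HA]; exists A; apply nsq_graft; auto using nsq_unstraighten).
  destruct excluded_middle_informative as [C|C].
  - rewrite (straighten_local m _ (unstraighten m (fun y => g (c y)))); [|intros y Hy|apply depth_parent; auto].
    + rewrite IH, <- chosen_inv; auto; [|apply depth_parent; auto].
      destruct Hg as [A HA].
      destruct (nsq_restrict_sub (fun w => depth w = S m) (fun w => depth w = S m /\ chosen w) g A)
        as [a Ha]; [tauto|auto|].
      exists a. apply (nsq_chosen_reindex m (fun y => g (c y)) g a); auto.
    + unfold pullback. rewrite (reflect_involutive m); [|auto|rewrite depth_c; auto].
      unfold graft. rewrite parent_c.
      destruct excluded_middle_informative as [_|n]; [|exfalso; apply n, chosen_c].
      apply Cmul_conj_unit, Cnorm2_wphase.
  - rewrite (reflect_involutive m); auto. unfold graft. destruct excluded_middle_informative; tauto.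
Qed.

Lemma l2_pullback m f : l2 (restrict_depth (S m) f) -> l2 (restrict_depth m (pullback f)).
Proof.
  intros [A HA]. apply nsq_reflect in HA.
  destruct (nsq_restrict_sub (fun w => depth w = S m) (fun w => depth w = S m /\ chosen w) (reflect f) A)
    as [a Ha]; [tauto|auto|].
  exists a. apply (nsq_chosen_reindex m _ (reflect f)); auto.
  intros; unfold pullback; rewrite Cnorm2_conj_wphase_mul; auto.
Qed.

Lemma straighten_add m : forall f g, l2 (restrict_depth m f) -> l2 (restrict_depth m g) ->
  forall w, depth w = m ->
  straighten m (fun v => Cadd (f v) (g v)) w = Cadd (straighten m f w) (straighten m g w).
Proof.
  induction m as [|m IH]; intros f g Hf Hg w Hw; simpl; auto.
  destruct excluded_middle_informative as [C|C]; [|apply (reflect_add m); auto].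
  rewrite (straighten_local m _ (fun y => Cadd (pullback f y) (pullback g y))).
  - apply IH; [apply l2_pullback; auto..|apply depth_parent; auto].
  - intros y Hy. unfold pullback. rewrite (reflect_add m); auto; [|rewrite depth_c; auto].
    destruct (wphase y), (reflect f (c y)), (reflect g (c y)); csimpl; f_equal; ring.
  - apply depth_parent; auto.
Qed.

Lemma straighten_scal m : forall f z, l2 (restrict_depth m f) ->
  forall w, depth w = m -> straighten m (fun v => Cmul z (f v)) w = Cmul z (straighten m f w).
Proof.
  induction m as [|m IH]; intros f z Hf w Hw; simpl; auto.
  destruct excluded_middle_informative as [C|C]; [|apply (reflect_scal m); auto].
  rewrite (straighten_local m _ (fun y => Cmul z (pullback f y))).
  - apply IH; [apply l2_pullback; auto|apply depth_parent; auto].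
  - intros y Hy. unfold pullback. rewrite (reflect_scal m); auto; [|rewrite depth_c; auto].
    destruct z, (wphase y), (reflect f (c y)); csimpl; f_equal; ring.
  - apply depth_parent; auto.
Qed.

Lemma reflect_shift m f : l2 f -> forall w, depth w = S m ->
  reflect (wshift par lam f) w =
    if excluded_middle_informative (chosen w)
    then Cmul (wphase (parent w)) (Cmul (RtoC (beta m)) (f (parent w))) else C0.
Proof.
  intros Hf w Hw. destruct (depth_S w m Hw) as [y [E Hy]]. rewrite (reflect_local _ w y E), (parent_eq w y E).
  replace (restrict (children_of y) (wshift par lam f)) with (fun v => Cmul (f y) (shift_col y v)).
  - rewrite householder_scal, householder_shift_col, Hy by (apply l2_rvec || apply l2_shift_col).
    unfold chosen. rewrite E.
    destruct classic_eq_dec, excluded_middle_informative; try tauto;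
      destruct (f y), (wphase y); csimpl; f_equal; ring.
  - apply functional_extensionality; intros v. unfold restrict, wshift.
    destruct excluded_middle_informative as [e|n].
    + rewrite e, shift_col_child; auto. destruct (f y), (lam v); csimpl; f_equal; ring.
    + rewrite shift_col_nchild; auto. destruct (f y); csimpl; f_equal; ring.
Qed.

Definition straighten_map (f : V -> Cx) : V -> Cx := fun w => straighten (depth w) f w.
Definition unstraighten_map (g : V -> Cx) : V -> Cx := fun w => unstraighten (depth w) g w.

Definition chain_shift (h : V -> Cx) : V -> Cx :=
  fun w => if excluded_middle_informative (chosen w)
           then Cmul (RtoC (beta (depth (parent w)))) (h (parent w)) else C0.

Lemma straighten_shift f :
  l2 f -> forall w, straighten_map (wshift par lam f) w = chain_shift (straighten_map f) w.
Proof.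
  intros Hf w. unfold straighten_map, chain_shift. destruct (depth w) as [|m] eqn:Hw.
  - rewrite (depth_eq0 w Hw). simpl. unfold wshift. rewrite par_root.
    destruct excluded_middle_informative as [C|]; auto. contradiction (root_not_chosen C).
  - simpl. destruct excluded_middle_informative as [C|C]; [|rewrite (reflect_shift m); auto;
      destruct excluded_middle_informative; tauto].
    rewrite (depth_parent w m Hw), (straighten_local m _ (fun y => Cmul (RtoC (beta m)) (f y)));
      [|intros y Hy|apply depth_parent; auto].
    + apply straighten_scal; [apply l2_restrict_depth; auto|apply depth_parent; auto].
    + unfold pullback. rewrite (reflect_shift m), parent_c; auto; [|rewrite depth_c; auto].
      destruct excluded_middle_informative as [_|n]; [|contradiction (n (chosen_c y))].
      apply Cmul_conj_unit, Cnorm2_wphase.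
Qed.

Lemma fiber_depth (f : V -> Cx) m w : fiber depth (fun w => Cnorm2 (f w)) m w = Cnorm2 (restrict_depth m f w).
Proof.
  unfold fiber, restrict_depth, restrict.
  destruct classic_eq_dec; destruct excluded_middle_informative; try congruence. rewrite Cnorm2_C0; auto.
Qed.

Lemma nsq_by_depth (F : nat -> (V -> Cx) -> V -> Cx) f A :
  (forall m h a, nsq (restrict_depth m h) a -> nsq (restrict_depth m (F m h)) a) ->
  nsq f A -> nsq (fun w => F (depth w) f w) A.
Proof.
  intros HF. apply (has_sum_fiberwise depth); try (intros; apply Cnorm2_nonneg).
  intros m a Ha. apply has_sum_ext with (fun w => Cnorm2 (restrict_depth m (F m f) w)).
  - intros w; rewrite fiber_depth. unfold restrict_depth, restrict.
    destruct excluded_middle_informative; subst; auto.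
  - apply HF. eapply has_sum_ext; [|exact Ha]. intros; rewrite fiber_depth; auto.
Qed.

Lemma straighten_unstraighten_map g : l2 g -> forall w, straighten_map (unstraighten_map g) w = g w.
Proof.
  intros Hg w. unfold straighten_map. rewrite (straighten_local (depth w) _ (unstraighten (depth w) g)); auto.
  - apply straighten_unstraighten; auto. apply l2_restrict_depth; auto.
  - intros v Hv. unfold unstraighten_map; rewrite Hv; auto.
Qed.

Lemma chain_shift_vertex_of h b :
  chain_shift h (vertex_of b) = model_op x (Jmult root par c) (fun i => h (vertex_of i)) b.
Proof.
  unfold chain_shift. destruct b as [n|[kk [j n]]]; simpl; destruct n as [|n]; simpl.
  - destruct excluded_middle_informative as [C|]; [contradiction (root_not_chosen C)|auto].
  - destruct excluded_middle_informative as [C|C]; [|contradiction (C (chosen_c _))].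
    rewrite parent_c, depth_iter, depth_root, Nat.add_0_r. reflexivity.
  - destruct excluded_middle_informative as [C|]; [contradiction (Jmult_not_chosen kk j C)|auto].
  - destruct excluded_middle_informative as [C|C]; [|contradiction (C (chosen_c _))].
    rewrite parent_c, depth_iter, xi_xi by apply x_ge1.
    destruct j as [[u v] [H1 [H2 H3]]]; simpl. rewrite (depth_child v u H2), (depth_eq kk u H1). reflexivity.
Qed.

Lemma unitarily_equiv_model : unitarily_equiv (wshift par lam) (model_op x (Jmult root par c)).
Proof.
  assert (Hnsq : forall f A, nsq f A -> nsq (fun i => straighten_map f (vertex_of i)) A)
    by (intros f A HA; apply nsq_vertex_of, (nsq_by_depth straighten); auto using nsq_straighten).
  exists (fun f i => straighten_map f (vertex_of i)). split; [|split; [|split; [|split; [|split]]]].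
  - intros f [A HA]. exists A; auto.
  - intros f g Hf Hg b. apply straighten_add; auto; apply l2_restrict_depth; auto.
  - intros z f Hf b. apply straighten_scal; auto; apply l2_restrict_depth; auto.
  - intros f s [A HA]. split; intros Hs.
    + rewrite (nsq_unique f s A Hs HA). auto.
    + rewrite (nsq_unique _ s A Hs (Hnsq f A HA)). auto.
  - intros g [A HA]. set (g' := fun w => g (index_of w)).
    assert (Hg' : nsq g' A)
      by (apply nsq_vertex_of; eapply nsq_ext; [|exact HA];
          intros; unfold g'; rewrite index_of_vertex_of; auto).
    exists (unstraighten_map g'). split.
    + exists A; apply (nsq_by_depth unstraighten); auto using nsq_unstraighten.
    + intros b. rewrite straighten_unstraighten_map by (exists A; auto).
      unfold g'; rewrite index_of_vertex_of; auto.
  - intros f Hf b. rewrite straighten_shift by auto. apply chain_shift_vertex_of.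
Qed.

End Shift.
End ChildChoice.
End Tree.

Theorem mainTheorem15 (V : Type) (root : V) (par : V -> option V)
  (lam : V -> Cx) (alpha : V -> R) (x : R) :
  is_rooted_tree root par ->
  bounded_op (wshift par lam) ->
  two_isometry (wshift par lam) ->
  (forall v, 0 <= alpha v) ->
  (forall u p, par u = Some p -> nsq (wshift par lam (e_ u)) (alpha p ^ 2)) ->
  0 <= x -> nsq (wshift par lam (e_ root)) (x ^ 2) ->
  leafless par /\
  exists c : V -> V,
    (forall u, par (c u) = Some u) /\
    unitarily_equiv (wshift par lam) (model_op x (Jmult root par c)) /\
    ((forall v, v <> root -> lam v <> C0) ->
       forall kk, exists h : Jmult root par c kk -> nat, forall a b, h a = h b -> a = b).
Proof.
  (* only the norms of [S e_u] and [S^2 e_u] enter *)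
  intros Htree _ H2i _ Hal Hx0 Hx.
  destruct (choice (fun u w => par w = Some u /\ lam w <> C0)
              (exists_nonzero_child V root par Htree lam alpha x H2i Hal Hx)) as [c Hc].
  split; [intros u; exists (c u); apply Hc|].
  exists c. split; [intros u; apply Hc|]. split.
  - apply (unitarily_equiv_model V root par Htree c (fun u => proj1 (Hc u)) lam alpha x H2i Hal Hx0 Hx
             (fun u => proj2 (Hc u))).
  - intros Hnz. apply Jmult_countable; auto.
    apply (children_countable V root par Htree lam alpha x Hal Hx Hnz).
Qed.
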